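(* Let $\mu,\mu',\nu$ be subdistributions over closed nondeterministic expressions and $\alpha$ an action such that $\nu\approx\mu$ and $\mu\xRightarrow{\hat\alpha}\mu'$, where this weak transition is convergent (i.e. $|\mu|=|\mu'|$). Then there exists $\nu'$ such that $\nu\xRightarrow{\hat\alpha}\nu'$ and $\nu'\approx\mu'$.
   Context: Fix a set $\mathsf{Act}$ of actions containing $\tau$. Nondeterministic expressions: $E ::= 0 \mid X \mid \alpha.P \mid \mathrm{rec}\,X.E \mid E + E$; probabilistic expressions: $P ::= \partial(E) \mid P \oplus_p P$ ($0<p<1$); closed means no free variables. Subdistributions $\mu$ over $S$: $\mu:S\to\mathbb R_{\ge0}$, $|\mu|=\sum\mu(s)\le1$; $\delta_s$ Dirac. Semantics: least relations with $\partial(E)\mapsto\delta_E$; $P\oplus_pQ\mapsto p\mu+(1-p)\nu$ if $P\mapsto\mu,Q\mapsto\nu$; $\alpha.P\xrightarrow{\alpha}\mu$ if $P\mapsto\mu$; $\mathrm{rec}\,X.E\xrightarrow{\alpha}\mu$ if $E[\mathrm{rec}\,X.E/X]\xrightarrow{\alpha}\mu$; $E+F\xrightarrow{\alpha}\mu$ and $F+E\xrightarrow{\alpha}\mu$ if $E\xrightarrow{\alpha}\mu$. Combined transitions on subdistributions: least relation with $\delta_E\xrightarrow{\alpha}\mu$ if $E\xrightarrow{\alpha}\mu$, closed under $\sum p_i\nu_i\xrightarrow{\alpha}\sum p_i\mu_i$ ($\nu_i\xrightarrow{\alpha}\mu_i$, $p_i\ge0$, $\sum p_i\le1$). A derivation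 is $(\mu_i^{\to},\mu_i^{\times})_{i\in\mathbb N}$ with $\mu_i^{\to}\xrightarrow{\tau}\mu^{\to}_{i+1}+\mu^{\times}_{i+1}$; $\mu\Rightarrow\nu$ iff a derivation has $\mu=\mu_0^{\to}+\mu_0^{\times}$, $\nu=\sum_i\mu_i^\times$. $\mu\xRightarrow{\alpha}\nu$ iff $\mu\Rightarrow\xrightarrow{\alpha}\Rightarrow\nu$; $\xRightarrow{\hat\alpha}$ is $\Rightarrow$ for $\alpha=\tau$ and $\xRightarrow{\alpha}$ otherwise. A weak transition from $\mu$ to $\mu'$ is convergent if $|\mu|=|\mu'|$. Lifting of a relation $\mathcal R$ on expressions to subdistributions: least relation with $\delta_E\mathcal R\delta_F$ for $E\mathcal RF$, closed under $\sum p_i\mu_i\mathcal R\sum p_i\nu_i$ ($\mu_i\mathcal R\nu_i$, $p_i\ge0$, $\sum p_i\le1$). Weak bisimulation: relation $\mathcal R$ on closed expressions such that if $E\mathcal RF$ and $E\xrightarrow{\alpha}\mu$ then $F\xRightarrow{\hat\alpha}\nu$ with $\mu\mathcal R\nu$, and symmetrically; $\approx$ (weak bisimilarity, used lifted) is the union of all weak bisimulations. *)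

From Stdlib Require Import Reals List Classical ClassicalEpsilon.
Open Scope R_scope.
Set Implicit Arguments.

Section Calculus.
Variable Act : Type.
Variable tau : Act.

Definition prob := { p : R | 0 < p < 1 }.

Inductive nexp : Type :=
  | NNil : nexp
  | NVar : nat -> nexp
  | NPre : Act -> pexp -> nexp
  | NRec : nat -> nexp -> nexp
  | NSum : nexp -> nexp -> nexp
with pexp : Type :=
  | PDirac : nexp -> pexp
  | PChoice : pexp -> prob -> pexp -> pexp.

Fixpoint free_n (x : nat) (E : nexp) : Prop :=
  match E with
  | NNil => False
  | NVar y => x = y
  | NPre _ P => free_p x P
  | NRec y E' => x <> y /\ free_n x E'
  | NSum E1 E2 => free_n x E1 \/ free_n x E2
  end
with free_p (x : nat) (P : pexp) : Prop :=
  match P with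
  | PDirac E => free_n x E
  | PChoice P1 _ P2 => free_p x P1 \/ free_p x P2
  end.

Definition closed (E : nexp) : Prop := forall x, ~ free_n x E.

(** substitution E[G/X] (used only with G closed, so no capture) *)
Fixpoint subst_n (X : nat) (G : nexp) (E : nexp) : nexp :=
  match E with
  | NNil => NNil
  | NVar y => if Nat.eqb X y then G else NVar y
  | NPre a P => NPre a (subst_p X G P)
  | NRec y E' => if Nat.eqb X y then NRec y E' else NRec y (subst_n X G E')
  | NSum E1 E2 => NSum (subst_n X G E1) (subst_n X G E2)
  end
with subst_p (X : nat) (G : nexp) (P : pexp) : pexp :=
  match P with
  | PDirac E => PDirac (subst_n X G E)
  | PChoice P1 p P2 => PChoice (subst_p X G P1) p (subst_p X G P2)
  end.

Definition subd := nexp -> R.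

Definition delta (E : nexp) : subd :=
  fun s => if excluded_middle_informative (s = E) then 1 else 0.

Definition lsum (mu : subd) (l : list nexp) : R :=
  fold_right (fun s acc => mu s + acc) 0 l.

Definition subdist (mu : subd) : Prop :=
  (forall s, 0 <= mu s) /\ (forall l, NoDup l -> lsum mu l <= 1).

Definition closed_supp (mu : subd) : Prop :=
  forall s, mu s <> 0 -> closed s.

Definition mass_is (mu : subd) (r : R) : Prop :=
  is_lub (fun x => exists l, NoDup l /\ x = lsum mu l) r.

Definition same_mass (mu nu : subd) : Prop :=
  exists r, mass_is mu r /\ mass_is nu r.

Definition weights (p : nat -> R) : Prop :=
  (forall i, 0 <= p i) /\ (forall n, sum_f_R0 p n <= 1).

Definition is_wsum (p : nat -> R) (mus : nat -> subd) (mu : subd) : Prop :=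
  forall s, infinite_sum (fun i => p i * mus i s) (mu s).

Inductive pstep : pexp -> subd -> Prop :=
  | pstep_dirac : forall E, pstep (PDirac E) (delta E)
  | pstep_choice : forall P Q (p : prob) mu nu,
      pstep P mu -> pstep Q nu ->
      pstep (PChoice P p Q) (fun s => proj1_sig p * mu s + (1 - proj1_sig p) * nu s).

Inductive nstep : nexp -> Act -> subd -> Prop :=
  | nstep_pre : forall a P mu, pstep P mu -> nstep (NPre a P) a mu
  | nstep_rec : forall X E a mu,
      nstep (subst_n X (NRec X E) E) a mu -> nstep (NRec X E) a mu
  | nstep_suml : forall E F a mu, nstep E a mu -> nstep (NSum E F) a mu
  | nstep_sumr : forall E F a mu, nstep E a mu -> nstep (NSum F E) a mu.

(** Combined transitions on subdistributions.  A countable family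
    sum_i p_i nu_i (finite families are padded with weight 0 entries,
    which contribute nothing). *)
Inductive cstep : subd -> Act -> subd -> Prop :=
  | cstep_base : forall E a mu, nstep E a mu -> cstep (delta E) a mu
  | cstep_comb : forall a (p : nat -> R) (nus mus : nat -> subd) nu mu,
      weights p ->
      (forall i, p i = 0 \/ cstep (nus i) a (mus i)) ->
      is_wsum p nus nu -> is_wsum p mus mu ->
      cstep nu a mu.

Definition weak_tau (mu nu : subd) : Prop :=
  exists (mto mx : nat -> subd),
    (forall i, subdist (mto i) /\ subdist (mx i)) /\
    (forall i, cstep (mto i) tau (fun s => mto (S i) s + mx (S i) s)) /\
    mu = (fun s => mto 0%nat s + mx 0%nat s) /\
    (forall s, infinite_sum (fun i => mx i s) (nu s)).

Definition weak_act (mu : subd) (a : Act) (nu : subd) : Prop :=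
  exists mu1 mu2, subdist mu1 /\ subdist mu2 /\
    weak_tau mu mu1 /\ cstep mu1 a mu2 /\ weak_tau mu2 nu.

Definition weak_hat (mu : subd) (a : Act) (nu : subd) : Prop :=
  (a = tau -> weak_tau mu nu) /\ (a <> tau -> weak_act mu a nu).

Inductive lift (Rel : nexp -> nexp -> Prop) : subd -> subd -> Prop :=
  | lift_base : forall E F, Rel E F -> lift Rel (delta E) (delta F)
  | lift_comb : forall (p : nat -> R) (mus nus : nat -> subd) mu nu,
      weights p ->
      (forall i, p i = 0 \/ lift Rel (mus i) (nus i)) ->
      is_wsum p mus mu -> is_wsum p nus nu ->
      lift Rel mu nu.

Definition weak_bisimulation (Rel : nexp -> nexp -> Prop) : Prop :=
  (forall E F, Rel E F -> closed E /\ closed F) /\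
  (forall E F a mu, Rel E F -> nstep E a mu ->
     exists nu, weak_hat (delta F) a nu /\ lift Rel mu nu) /\
  (forall E F a nu, Rel E F -> nstep F a nu ->
     exists mu, weak_hat (delta E) a mu /\ lift Rel mu nu).

Definition wbisim (E F : nexp) : Prop :=
  exists Rel, weak_bisimulation Rel /\ Rel E F.

End Calculus.

Arguments NNil {Act}.

(* A lifted weak bisimilarity [nu ~ mu] is a countable convex combination of bisimilar Dirac
   pairs.  A combined transition of [mu] splits along this combination into transitions of the
   single Diracs; bisimilarity answers each of them by a weak transition, and recombining the
   answers simulates the step.  A weak tau transition of [mu] is a derivation; simulating its steps
   one after another yields infinitely many weak transitions of [nu], and these concatenate into a
   single weak transition exactly when the mass still moving in the derivation tends to zero, which
   is what convergence [|mu| = |mu'|] guarantees.  A visible weak transition is a step between two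
   weak tau transitions, each of which is convergent when the whole is. *)

From Stdlib Require Import Reals.
From Stdlib Require Import Lra Lia List FinFun Classical ClassicalEpsilon FunctionalExtensionality.
From Stdlib Require Cantor.
Open Scope R_scope.

Definition fsum {T} (g : T -> R) (l : list T) : R := fold_right (fun x acc => g x + acc) 0 l.

Definition has_sum {T} (g : T -> R) (S : R) : Prop :=
  is_lub (fun x => exists l, NoDup l /\ x = fsum g l) S.

Definition nonneg_fun {T} (g : T -> R) := forall x, 0 <= g x.

Definition fsums_le {T} (g : T -> R) (M : R) := forall l, NoDup l -> fsum g l <= M.

Section FiniteSums.
Context {T : Type}.
Implicit Types (g h : T -> R) (l : list T).

Lemma fsum_cons g x l : fsum g (x :: l) = g x + fsum g l.
Proof. reflexivity. Qed.

Lemma fsum_app g l1 l2 : fsum g (l1 ++ l2) = fsum g l1 + fsum g l2.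
Proof. induction l1 as [|x l1 IH]; [simpl; lra|]. simpl app. rewrite !fsum_cons, IH. lra. Qed.

Lemma fsum_nonneg g l : nonneg_fun g -> 0 <= fsum g l.
Proof. intros Hg; induction l as [|x l IH]; simpl; [lra|]. specialize (Hg x). lra. Qed.

Lemma fsum_ext g h l : (forall x, In x l -> g x = h x) -> fsum g l = fsum h l.
Proof.
  induction l as [|x l IH]; simpl; intros H; auto.
  rewrite H, IH; auto.
Qed.

Lemma fsum_le g h l : (forall x, In x l -> g x <= h x) -> fsum g l <= fsum h l.
Proof.
  induction l as [|x l IH]; simpl; intros H; [lra|].
  assert (g x <= h x) by auto. assert (fsum g l <= fsum h l) by auto. unfold fsum in *. lra.
Qed.

Lemma fsum_plus g h l : fsum (fun x => g x + h x) l = fsum g l + fsum h l.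
Proof. induction l as [|x l IH]; simpl; [lra|]. unfold fsum in *. rewrite IH. lra. Qed.

Lemma fsum_scal g c l : fsum (fun x => c * g x) l = c * fsum g l.
Proof. induction l as [|x l IH]; simpl; [lra|]. unfold fsum in *. rewrite IH. lra. Qed.

Lemma fsum_zero l : fsum (fun _ : T => 0) l = 0.
Proof. induction l as [|x l IH]; simpl; [lra|]. unfold fsum in *. rewrite IH. lra. Qed.

Lemma fsum_map {U} g (f : U -> T) (l : list U) : fsum g (map f l) = fsum (fun u => g (f u)) l.
Proof. induction l as [|x l IH]; simpl; [lra|]. unfold fsum in *. rewrite IH. lra. Qed.

Lemma fsum_le_support g l' l : nonneg_fun g -> NoDup l' ->
  (forall y, In y l' -> g y <> 0 -> In y l) -> fsum g l' <= fsum g l.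
Proof.
  intros Hg Hl'. revert l. induction Hl' as [|y l' Hy Hl' IH]; intros l H.
  - apply fsum_nonneg; auto.
  - rewrite fsum_cons. destruct (Req_dec (g y) 0) as [E|E].
    + rewrite E. assert (fsum g l' <= fsum g l) by (apply IH; intros z Hz; apply H; simpl; auto). lra.
    + assert (Hin : In y l) by (apply H; simpl; auto).
      destruct (in_split _ _ Hin) as [A [B ->]].
      rewrite fsum_app, fsum_cons.
      assert (fsum g l' <= fsum g (A ++ B)).
      { apply IH. intros z Hz Hgz.
        assert (Hz' : In z (A ++ y :: B)) by (apply H; simpl; auto).
        apply in_app_or in Hz'. apply in_or_app. destruct Hz' as [Hz'|[<-|Hz']]; auto. contradiction. }
      rewrite fsum_app in H0. lra.
Qed.

Lemma fsum_incl g l' l : nonneg_fun g -> NoDup l' -> incl l' l -> fsum g l' <= fsum g l.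
Proof. intros. apply fsum_le_support; auto. Qed.

End FiniteSums.

Lemma exists_NoDup_same_elems {T} (l : list T) :
  exists l', NoDup l' /\ (forall x, In x l <-> In x l').
Proof.
  exists (nodup (fun x y => excluded_middle_informative (x = y)) l).
  split; [apply NoDup_nodup|]. intros x. symmetry. apply nodup_In.
Qed.

Lemma exists_NoDup_incl_app {T} (l1 l2 : list T) :
  exists L, NoDup L /\ incl l1 L /\ incl l2 L.
Proof.
  destruct (exists_NoDup_same_elems (l1 ++ l2)) as [L [HL HL2]].
  exists L. split; [auto|split]; intros x Hx; apply HL2, in_or_app; auto.
Qed.

Section UnorderedSums.
Context {T : Type}.
Implicit Types (g h : T -> R).

Lemma has_sum_ub g S l : has_sum g S -> NoDup l -> fsum g l <= S.
Proof. intros [H _] Hl. apply H. eauto. Qed.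

Lemma has_sum_least g S B : has_sum g S -> fsums_le g B -> S <= B.
Proof. intros [_ H] HB. apply H. intros x [l [Hl ->]]. auto. Qed.

Lemma has_sum_intro g S : fsums_le g S -> (forall B, fsums_le g B -> S <= B) -> has_sum g S.
Proof.
  intros H1 H2. split.
  - intros x [l [Hl ->]]; auto.
  - intros B HB. apply H2. intros l Hl. apply HB; eauto.
Qed.

Lemma has_sum_fsums_le g S : has_sum g S -> fsums_le g S.
Proof. intros H l Hl. eapply has_sum_ub; eauto. Qed.

Lemma has_sum_unique g S1 S2 : has_sum g S1 -> has_sum g S2 -> S1 = S2.
Proof.
  intros H1 H2. apply Rle_antisym; eapply has_sum_least; eauto; apply has_sum_fsums_le; auto.
Qed.

Lemma has_sum_approx g S eps : has_sum g S -> eps > 0 ->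
  exists l, NoDup l /\ S - eps < fsum g l.
Proof.
  intros H He. apply NNPP. intros Hn.
  assert (S <= S - eps).
  { apply (has_sum_least g); auto. intros l Hl. apply Rnot_lt_le. intros Hc. apply Hn. eauto. }
  lra.
Qed.

Lemma has_sum_exists g M : fsums_le g M -> exists S, has_sum g S /\ S <= M.
Proof.
  intros H.
  destruct (completeness (fun x => exists l, NoDup l /\ x = fsum g l)) as [S HS].
  - exists M. intros x [l [Hl ->]]. auto.
  - exists 0. exists nil. split; [constructor|reflexivity].
  - exists S. split; auto. apply HS. intros x [l [Hl ->]]. auto.
Qed.

Lemma has_sum_nonneg g S : has_sum g S -> 0 <= S.
Proof. intros H. apply (has_sum_ub g S nil H). constructor. Qed.

Lemma has_sum_term_le g S x : has_sum g S -> g x <= S.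
Proof.
  intros H. assert (fsum g (x :: nil) <= S) by (apply (has_sum_ub g); auto; repeat constructor; auto).
  simpl in H0. lra.
Qed.

Lemma has_sum_le g h S1 S2 : (forall x, g x <= h x) -> has_sum g S1 -> has_sum h S2 -> S1 <= S2.
Proof.
  intros Hgh H1 H2. apply (has_sum_least g); auto. intros l Hl.
  apply Rle_trans with (fsum h l). apply fsum_le; auto. eapply has_sum_ub; eauto.
Qed.

Lemma has_sum_dominated g h S2 : (forall x, g x <= h x) -> has_sum h S2 ->
  exists S1, has_sum g S1 /\ S1 <= S2.
Proof.
  intros Hgh H2. apply has_sum_exists. intros l Hl.
  apply Rle_trans with (fsum h l). apply fsum_le; auto. eapply has_sum_ub; eauto.
Qed.

Lemma has_sum_ext g h S : (forall x, g x = h x) -> has_sum g S -> has_sum h S.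
Proof. intros E H. replace h with g; auto. apply functional_extensionality; auto. Qed.

Lemma has_sum_zero : has_sum (fun _ : T => 0) 0.
Proof.
  apply has_sum_intro.
  - intros l _. rewrite fsum_zero; lra.
  - intros B HB. apply (HB nil (NoDup_nil _)).
Qed.

Lemma has_sum_0_inv g x : nonneg_fun g -> has_sum g 0 -> g x = 0.
Proof. intros Hg H. pose proof (has_sum_term_le g 0 x H). specialize (Hg x). lra. Qed.

Lemma has_sum_plus g h S1 S2 : nonneg_fun g -> nonneg_fun h -> has_sum g S1 -> has_sum h S2 ->
  has_sum (fun x => g x + h x) (S1 + S2).
Proof.
  intros Hg Hh H1 H2. apply has_sum_intro.
  - intros l Hl. rewrite fsum_plus.
    pose proof (has_sum_ub g S1 l H1 Hl). pose proof (has_sum_ub h S2 l H2 Hl). lra.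
  - intros B HB. apply Rnot_lt_le; intros Hc. set (e := (S1 + S2 - B) / 3).
    assert (e > 0) by (unfold e; lra).
    destruct (has_sum_approx g S1 e H1 H) as [l1 [Hl1 A1]].
    destruct (has_sum_approx h S2 e H2 H) as [l2 [Hl2 A2]].
    destruct (exists_NoDup_incl_app l1 l2) as [L [HL [I1 I2]]].
    pose proof (fsum_incl g l1 L Hg Hl1 I1). pose proof (fsum_incl h l2 L Hh Hl2 I2).
    specialize (HB L HL). rewrite fsum_plus in HB. unfold e in *. lra.
Qed.

Lemma has_sum_scal g c S : 0 <= c -> has_sum g S -> has_sum (fun x => c * g x) (c * S).
Proof.
  intros Hc H. destruct (Req_dec c 0) as [->|Hc0].
  - rewrite Rmult_0_l. apply has_sum_ext with (fun _ => 0); [intros; lra|apply has_sum_zero].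
  - apply has_sum_intro.
    + intros l Hl. rewrite fsum_scal. apply Rmult_le_compat_l; auto. eapply has_sum_ub; eauto.
    + intros B HB. assert (S <= B / c).
      { apply (has_sum_least g); auto. intros l Hl. specialize (HB l Hl). rewrite fsum_scal in HB.
        apply Rmult_le_reg_l with c. lra. field_simplify; lra. }
      apply Rmult_le_compat_l with (r := c) in H0; auto. field_simplify in H0; lra.
Qed.

Lemma has_sum_scal_1 g c : 0 <= c -> has_sum g 1 -> has_sum (fun x => c * g x) c.
Proof. intros Hc H. pose proof (has_sum_scal g c 1 Hc H) as Hs. rewrite Rmult_1_r in Hs. exact Hs. Qed.

Lemma has_sum_finite_support g l : nonneg_fun g -> NoDup l -> (forall y, ~ In y l -> g y = 0) ->
  has_sum g (fsum g l).
Proof.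
  intros Hg Hl H. apply has_sum_intro.
  - intros l' Hl'. apply fsum_le_support; auto.
    intros y Hy Hgy. apply NNPP. intros Hc. apply Hgy; auto.
  - intros B HB. apply HB; auto.
Qed.

Lemma has_sum_single g x v : nonneg_fun g -> (forall y, y <> x -> g y = 0) -> g x = v -> has_sum g v.
Proof.
  intros Hg H <-. replace (g x) with (fsum g (x :: nil)) by (simpl; lra).
  apply has_sum_finite_support; auto. repeat constructor; auto.
  intros y Hy. apply H. intros ->. apply Hy; simpl; auto.
Qed.

(* Junk value 0 when [g] is not summable. *)
Definition sum_of g : R :=
  match excluded_middle_informative (exists S, has_sum g S) with
  | left H => proj1_sig (constructive_indefinite_description _ H)
  | right _ => 0
  end.

Lemma sum_of_spec g : (exists S, has_sum g S) -> has_sum g (sum_of g).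
Proof.
  intros H. unfold sum_of. destruct excluded_middle_informative as [H'|H']; [|contradiction].
  destruct constructive_indefinite_description; auto.
Qed.

Lemma sum_of_eq g S : has_sum g S -> sum_of g = S.
Proof. intros H. eapply has_sum_unique; [apply sum_of_spec|]; eauto. Qed.

End UnorderedSums.

Lemma fsum_pull_back {T U} (f : U -> T) (g : T -> R) lt : nonneg_fun g -> NoDup lt -> Injective f ->
  (forall t, g t <> 0 -> exists u, f u = t) ->
  exists lu, NoDup lu /\ fsum g lt <= fsum (fun u => g (f u)) lu /\ (forall u, In u lu -> In (f u) lt).
Proof.
  intros Hg Hl Hi Hs. induction Hl as [|t lt Ht Hl IH].
  - exists nil. simpl. split; [constructor|]. split; [lra|tauto].
  - destruct IH as [lu [H1 [H2 H3]]]. destruct (Req_dec (g t) 0) as [E|E].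
    + exists lu. rewrite fsum_cons, E. split; [auto|split; [lra|]]. intros u Hu; simpl; auto.
    + destruct (Hs t E) as [u Hu]. exists (u :: lu). split; [|split].
      * constructor; auto. intros Hc. apply H3 in Hc. rewrite Hu in Hc. contradiction.
      * rewrite !fsum_cons, Hu. lra.
      * intros v [<-|Hv]; simpl; auto.
Qed.

Lemma has_sum_reindex {T U} (f : U -> T) (g : T -> R) S : nonneg_fun g -> Injective f ->
  (forall t, g t <> 0 -> exists u, f u = t) ->
  (has_sum (fun u => g (f u)) S <-> has_sum g S).
Proof.
  intros Hg Hi Hs.
  assert (Push : forall B, fsums_le g B -> fsums_le (fun u => g (f u)) B).
  { intros B HB lu Hlu. rewrite <- fsum_map. apply HB. apply Injective_map_NoDup; auto. }
  assert (Pull : forall B, fsums_le (fun u => g (f u)) B -> fsums_le g B).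
  { intros B HB lt Hlt. destruct (fsum_pull_back f g lt Hg Hlt Hi Hs) as [lu [H1 [H2 _]]].
    specialize (HB lu H1). lra. }
  split; intros H; apply has_sum_intro.
  - apply Pull, has_sum_fsums_le; auto.
  - intros B HB. apply (has_sum_least _ S B H). auto.
  - apply Push, has_sum_fsums_le; auto.
  - intros B HB. apply (has_sum_least _ S B H). auto.
Qed.

Section Fubini.
Context {T U : Type} (g : T -> U -> R) (Hg : forall t u, 0 <= g t u).

Lemma uncurry_nonneg : nonneg_fun (uncurry g).
Proof. intros [t u]; apply Hg. Qed.

Lemma fsum_list_prod lt lu : fsum (uncurry g) (list_prod lt lu) = fsum (fun t => fsum (g t) lu) lt.
Proof.
  induction lt as [|t lt IH]; [reflexivity|].
  simpl list_prod. rewrite fsum_app, fsum_map, fsum_cons, IH. reflexivity.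
Qed.

Lemma fsum_pairs_le (h : T -> R) S L : (forall t, has_sum (g t) (h t)) -> fsums_le h S ->
  NoDup L -> fsum (uncurry g) L <= S.
Proof.
  intros Hh HS HL.
  destruct (exists_NoDup_same_elems (map fst L)) as [lt [Hlt Elt]].
  destruct (exists_NoDup_same_elems (map snd L)) as [lu [Hlu Elu]].
  apply Rle_trans with (fsum (uncurry g) (list_prod lt lu)).
  { apply fsum_incl; auto. apply uncurry_nonneg. intros [a b] Hp. apply in_prod.
    - apply Elt, in_map_iff. exists (a, b); auto.
    - apply Elu, in_map_iff. exists (a, b); auto. }
  rewrite fsum_list_prod. apply Rle_trans with (fsum h lt); auto.
  apply fsum_le. intros t _. eapply has_sum_ub; eauto.
Qed.

Lemma fsum_pairs_approx (h : T -> R) lt eps : (forall t, has_sum (g t) (h t)) -> NoDup lt -> eps > 0 ->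
  exists L, NoDup L /\ (forall p, In p L -> In (fst p) lt) /\ fsum h lt - eps < fsum (uncurry g) L.
Proof.
  intros Hh Hlt. revert eps. induction Hlt as [|t lt Ht Hl IH]; intros eps He.
  - exists nil. simpl. split; [constructor|]. split; [tauto|lra].
  - destruct (IH (eps / 2)) as [L [H1 [H2 H3]]]; [lra|].
    destruct (has_sum_approx (g t) (h t) (eps / 2) (Hh t)) as [lu [Hlu A]]; [lra|].
    exists (map (pair t) lu ++ L). split; [|split].
    + apply NoDup_app; auto.
      * apply Injective_map_NoDup; auto. intros a b E; inversion E; auto.
      * intros p Hp Hp2. apply in_map_iff in Hp. destruct Hp as [u [<- _]].
        apply H2 in Hp2. contradiction.
    + intros p Hp. apply in_app_or in Hp. destruct Hp as [Hp|Hp].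
      * apply in_map_iff in Hp. destruct Hp as [u [<- _]]. simpl; auto.
      * simpl; auto.
    + rewrite fsum_app, fsum_map, fsum_cons.
      change (fsum (fun u => uncurry g (t, u)) lu) with (fsum (g t) lu). lra.
Qed.

Lemma has_sum_pairs_of_rows (h : T -> R) S : (forall t, has_sum (g t) (h t)) -> has_sum h S ->
  has_sum (uncurry g) S.
Proof.
  intros Hh HS. apply has_sum_intro.
  - intros L HL. apply (fsum_pairs_le h); auto. apply has_sum_fsums_le; auto.
  - intros B HB. apply (has_sum_least h S B HS). intros lt Hlt. apply Rnot_lt_le. intros Hc.
    destruct (fsum_pairs_approx h lt (fsum h lt - B) Hh Hlt) as [L [H1 [_ H3]]]; [lra|].
    specialize (HB L H1). lra.
Qed.

Lemma has_sum_rows_of_pairs S : has_sum (uncurry g) S ->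
  exists h, (forall t, has_sum (g t) (h t)) /\ has_sum h S.
Proof.
  intros HS.
  assert (Hrow : forall t, exists x, has_sum (g t) x).
  { intros t. destruct (has_sum_exists (g t) S) as [x [Hx _]]; eauto.
    intros lu Hlu. replace (fsum (g t) lu) with (fsum (uncurry g) (map (pair t) lu))
      by (rewrite fsum_map; reflexivity).
    apply (has_sum_ub (uncurry g)); auto.
    apply Injective_map_NoDup; auto. intros a b E; inversion E; auto. }
  assert (Hh : forall t, has_sum (g t) (sum_of (g t))) by (intros; apply sum_of_spec; auto).
  exists (fun t => sum_of (g t)). split; auto.
  destruct (has_sum_exists (fun t => sum_of (g t)) S) as [S' [HS' _]].
  { intros lt Hlt. apply Rle_plus_epsilon. intros e He.
    destruct (fsum_pairs_approx _ lt e Hh Hlt He) as [L [H1 [_ H3]]].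
    pose proof (has_sum_ub (uncurry g) S L HS H1). lra. }
  rewrite (has_sum_unique (uncurry g) S S'); auto. apply (has_sum_pairs_of_rows _ S' Hh HS').
Qed.

End Fubini.

Lemma has_sum_uncurry_swap {T U} (g : T -> U -> R) S : (forall t u, 0 <= g t u) ->
  has_sum (uncurry (fun u t => g t u)) S -> has_sum (uncurry g) S.
Proof.
  intros Hg H.
  apply has_sum_ext with (fun p : T * U => uncurry (fun u t => g t u) (snd p, fst p)); [intros [a b]; reflexivity|].
  apply (has_sum_reindex (fun p : T * U => (snd p, fst p)) (uncurry (fun u t => g t u))); auto.
  - intros [a b]; apply Hg.
  - intros [a b] [c d] E; inversion E; auto.
  - intros [a b] _. exists (b, a); auto.
Qed.

Lemma has_sum_pairs_of_cols {T U} (g : T -> U -> R) (h : U -> R) S : (forall t u, 0 <= g t u) ->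
  (forall u, has_sum (fun t => g t u) (h u)) -> has_sum h S -> has_sum (uncurry g) S.
Proof.
  intros Hg Hh HS. apply has_sum_uncurry_swap; auto.
  apply (has_sum_pairs_of_rows (fun u t => g t u) (fun u t => Hg t u) h); auto.
Qed.

Lemma has_sum_cols_of_rows {T U} (g : T -> U -> R) (h : T -> R) S : (forall t u, 0 <= g t u) ->
  (forall t, has_sum (g t) (h t)) -> has_sum h S ->
  exists k, (forall u, has_sum (fun t => g t u) (k u)) /\ has_sum k S.
Proof.
  intros Hg Hh HS.
  apply (has_sum_rows_of_pairs (fun u t => g t u) (fun u t => Hg t u)), has_sum_uncurry_swap; auto.
  apply (has_sum_pairs_of_rows g Hg h); auto.
Qed.

Lemma has_sum_rows_cols_iff {I T} (g : I -> T -> R) (c : I -> R) (f : T -> R) m :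
  (forall k s, 0 <= g k s) -> (forall k, has_sum (g k) (c k)) ->
  (forall s, has_sum (fun k => g k s) (f s)) -> (has_sum c m <-> has_sum f m).
Proof.
  intros Hg Hc Hf. split; intros H.
  - destruct (has_sum_cols_of_rows g c m Hg Hc H) as [k [Hk1 Hk2]].
    apply has_sum_ext with k; auto. intros s. eapply has_sum_unique; eauto.
  - destruct (has_sum_rows_of_pairs g Hg m (has_sum_pairs_of_cols g f m Hg Hf H)) as [h [Hh1 Hh2]].
    apply has_sum_ext with h; auto. intros k. eapply has_sum_unique; eauto.
Qed.

Lemma has_sum_fsum {T U} (f : T -> U -> R) (F : U -> R) l : (forall t u, 0 <= f t u) ->
  (forall u, In u l -> has_sum (fun t => f t u) (F u)) -> has_sum (fun t => fsum (f t) l) (fsum F l).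
Proof.
  intros Hf H. induction l as [|u l IH].
  - apply has_sum_zero.
  - apply has_sum_plus.
    + intros t; apply Hf.
    + intros t; apply fsum_nonneg. intros x; apply Hf.
    + apply H; simpl; auto.
    + apply IH. intros; apply H; simpl; auto.
Qed.

Lemma sum_f_R0_fsum (f : nat -> R) n : sum_f_R0 f n = fsum f (seq 0 (S n)).
Proof.
  induction n as [|n IH]; [simpl; lra|].
  rewrite seq_S, fsum_app, <- IH. simpl. lra.
Qed.

Lemma incl_seq_eventually (l : list nat) : exists N, forall n, (N <= n)%nat -> incl l (seq 0 n).
Proof.
  induction l as [|a l [N HN]].
  - exists 0%nat. intros n _ x [].
  - exists (Nat.max (S a) N). intros n Hn x [<-|Hx].
    + apply in_seq. lia.
    + apply (HN n); [lia|auto].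
Qed.

Lemma fsum_seq_mono (f : nat -> R) m n : nonneg_fun f -> (m <= n)%nat ->
  fsum f (seq 0 m) <= fsum f (seq 0 n).
Proof.
  intros Hf Hmn. apply fsum_incl; auto using seq_NoDup.
  intros x Hx. apply in_seq in Hx. apply in_seq. lia.
Qed.

Lemma has_sum_nat_lim (f : nat -> R) L : nonneg_fun f -> (has_sum f L <->
  forall e, e > 0 -> exists N, forall n, (N <= n)%nat -> Rabs (fsum f (seq 0 n) - L) < e).
Proof.
  intros Hf. split.
  - intros H e He. destruct (has_sum_approx f L e H He) as [l [Hl A]].
    destruct (incl_seq_eventually l) as [N HN]. exists N. intros n Hn.
    pose proof (fsum_incl f l _ Hf Hl (HN n Hn)).
    pose proof (has_sum_ub f L (seq 0 n) H (seq_NoDup _ _)).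
    rewrite Rabs_left1; lra.
  - intros H.
    assert (Hle : forall n, fsum f (seq 0 n) <= L).
    { intros n. apply Rnot_lt_le. intros Hc.
      destruct (H (fsum f (seq 0 n) - L)) as [N HN]; [lra|].
      specialize (HN (Nat.max n N) ltac:(lia)).
      pose proof (fsum_seq_mono f n (Nat.max n N) Hf ltac:(lia)).
      rewrite Rabs_right in HN; lra. }
    apply has_sum_intro.
    + intros l Hl. destruct (incl_seq_eventually l) as [N HN].
      apply Rle_trans with (fsum f (seq 0 N)); auto. apply fsum_incl; auto.
    + intros B HB. apply Rnot_lt_le. intros Hc. destruct (H (L - B)) as [N HN]; [lra|].
      specialize (HN N (le_n _)). specialize (HB (seq 0 N) (seq_NoDup _ _)).
      rewrite Rabs_left1 in HN; [lra|]. specialize (Hle N). lra.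
Qed.

Lemma has_sum_nat_bounded (f : nat -> R) B : nonneg_fun f -> (forall n, fsum f (seq 0 n) <= B) ->
  exists S, has_sum f S /\ S <= B.
Proof.
  intros Hf H. apply has_sum_exists. intros l Hl. destruct (incl_seq_eventually l) as [N HN].
  apply Rle_trans with (fsum f (seq 0 N)); auto. apply fsum_incl; auto.
Qed.

Lemma infinite_sum_has_sum (f : nat -> R) L : nonneg_fun f -> (infinite_sum f L <-> has_sum f L).
Proof.
  intros Hf. rewrite (has_sum_nat_lim f L Hf). unfold infinite_sum, R_dist. split.
  - intros H e He. destruct (H e He) as [N HN]. exists (S N). intros [|n] Hn; [lia|].
    rewrite <- sum_f_R0_fsum. apply HN. lia.
  - intros H e He. destruct (H e He) as [N HN]. exists N. intros n Hn.
    rewrite sum_f_R0_fsum. apply HN. lia.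
Qed.

Lemma has_sum_truncate (f : nat -> R) w : (forall u, (u <= w)%nat -> 0 <= f u) ->
  has_sum (fun u => if Compare_dec.le_dec u w then f u else 0) (fsum f (seq 0 (S w))).
Proof.
  intros H. rewrite (fsum_ext f (fun u => if Compare_dec.le_dec u w then f u else 0)).
  - apply has_sum_finite_support; auto using seq_NoDup.
    + intros u; destruct Compare_dec.le_dec; auto; lra.
    + intros y Hy. destruct Compare_dec.le_dec; auto. exfalso; apply Hy, in_seq; lia.
  - intros u Hu. apply in_seq in Hu. destruct Compare_dec.le_dec; auto. lia.
Qed.

Definition antidiag (F : nat -> nat -> R) (w : nat) : R := fsum (fun u => F u (w - u)%nat) (seq 0 (S w)).

Lemma antidiag_0 (F : nat -> nat -> R) : antidiag F 0 = F 0%nat 0%nat.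
Proof. unfold antidiag. simpl. ring. Qed.

Lemma antidiag_succ (F : nat -> nat -> R) w :
  antidiag F (S w) = antidiag (fun u t => F u (S t)) w + F (S w) 0%nat.
Proof.
  unfold antidiag. rewrite (seq_S (S w)), fsum_app, fsum_cons, Nat.add_0_l, Nat.sub_diag. simpl (fsum _ nil).
  rewrite Rplus_0_r. f_equal. apply fsum_ext. intros u Hu. apply in_seq in Hu. f_equal. lia.
Qed.

Lemma antidiag_plus (F G : nat -> nat -> R) w :
  antidiag (fun u t => F u t + G u t) w = antidiag F w + antidiag G w.
Proof. apply fsum_plus. Qed.

Lemma antidiag_nonneg (F : nat -> nat -> R) w : (forall u t, 0 <= F u t) -> 0 <= antidiag F w.
Proof. intros H. apply fsum_nonneg. intros u. apply H. Qed.

Lemma has_sum_antidiagonals (F : nat -> nat -> R) L : (forall u t, 0 <= F u t) ->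
  has_sum (uncurry F) L -> has_sum (antidiag F) L.
Proof.
  intros HF H.
  set (G := fun u w => if Compare_dec.le_dec u w then F u (w - u)%nat else 0).
  assert (HG : forall u w, 0 <= G u w).
  { intros; unfold G; destruct Compare_dec.le_dec; [apply HF|lra]. }
  assert (HGS : has_sum (uncurry G) L).
  { apply (has_sum_reindex (fun p : nat * nat => (fst p, fst p + snd p)%nat) (uncurry G)).
    - apply uncurry_nonneg; auto.
    - intros [a b] [c d] E; inversion E; f_equal; lia.
    - intros [u w] Hz. unfold uncurry, G in Hz. destruct Compare_dec.le_dec; [|lra].
      exists (u, (w - u)%nat). simpl. f_equal; lia.
    - apply has_sum_ext with (uncurry F); auto. intros [a b]. unfold uncurry, G; simpl.
      destruct Compare_dec.le_dec; [|lia]. f_equal; lia. }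
  apply has_sum_uncurry_swap in HGS; [|auto].
  destruct (has_sum_rows_of_pairs _ (fun u w => HG w u) L HGS) as [k [Hk1 Hk2]].
  apply has_sum_ext with k; auto. intros w. apply (has_sum_unique (fun u => G u w)); auto.
  apply has_sum_truncate. intros; apply HF.
Qed.

Definition full_dist {T} (mu : T -> R) : Prop := nonneg_fun mu /\ has_sum mu 1.

Definition partition_of_unity {T} (r : nat -> T -> R) : Prop :=
  (forall i x, 0 <= r i x) /\ (forall x, has_sum (fun i => r i x) 1).

Section PartitionsOfUnity.
Context {T : Type}.

Lemma partition_of_unity_le1 (r : nat -> T -> R) i x : partition_of_unity r -> r i x <= 1.
Proof. intros [_ H]. apply (has_sum_term_le (fun i => r i x)); auto. Qed.

Lemma partition_of_unity_first : partition_of_unity (fun i (_ : T) => if Nat.eq_dec i 0 then 1 else 0).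
Proof.
  split; [intros i x; destruct Nat.eq_dec; lra|].
  intros x. apply (has_sum_single _ 0%nat); [intros i; destruct Nat.eq_dec; lra| |reflexivity].
  intros i Hi; destruct Nat.eq_dec; [contradiction|auto].
Qed.

(* Where [mu x = 0] the ratios are junk; the first index then takes everything. *)
Lemma partition_of_unity_ratio (mus : nat -> T -> R) (mu : T -> R) : (forall i x, 0 <= mus i x) ->
  (forall x, has_sum (fun i => mus i x) (mu x)) ->
  exists r, partition_of_unity r /\ forall i x, r i x * mu x = mus i x.
Proof.
  intros Hn Hs.
  assert (Hmu : forall x, 0 <= mu x) by (intros x; apply (has_sum_nonneg _ _ (Hs x))).
  exists (fun i x => if Req_EM_T (mu x) 0 then (if Nat.eq_dec i 0 then 1 else 0) else mus i x / mu x).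
  split; [split|].
  - intros i x. destruct Req_EM_T; [destruct Nat.eq_dec; lra|].
    apply Rmult_le_pos; auto. apply Rlt_le, Rinv_0_lt_compat. specialize (Hmu x); lra.
  - intros x. destruct Req_EM_T as [Z|Z]; [apply (proj2 partition_of_unity_first x)|].
    apply has_sum_ext with (fun i => / mu x * mus i x); [intros i; unfold Rdiv; ring|].
    replace 1 with (/ mu x * mu x) by (field; auto). apply has_sum_scal; auto.
    apply Rlt_le, Rinv_0_lt_compat. specialize (Hmu x). lra.
  - intros i x. destruct Req_EM_T as [Z|Z]; [|field; auto].
    pose proof (has_sum_term_le _ _ i (Hs x)). specialize (Hn i x). simpl in *. rewrite Z in *. lra.
Qed.

End PartitionsOfUnity.

Section Subdistributions.
Context {Act : Type}.
Implicit Types (E s : nexp Act) (mu nu : subd Act).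

Lemma delta_at E : delta E E = 1.
Proof. unfold delta; destruct excluded_middle_informative; congruence. Qed.

Lemma delta_other E s : s <> E -> delta E s = 0.
Proof. intros H; unfold delta; destruct excluded_middle_informative; congruence. Qed.

Lemma delta_full_dist E : full_dist (delta E).
Proof.
  assert (Hn : nonneg_fun (delta E)) by (intros s; unfold delta; destruct excluded_middle_informative; lra).
  split; auto. apply (has_sum_single _ E); auto using delta_other, delta_at.
Qed.

Lemma subdist_nonneg mu : subdist mu -> nonneg_fun mu.
Proof. intros [H _]; exact H. Qed.

Lemma subdist_mass mu : subdist mu -> exists m, has_sum mu m /\ m <= 1.
Proof. intros [_ H]. apply has_sum_exists; exact H. Qed.

Lemma subdist_of_mass mu m : nonneg_fun mu -> has_sum mu m -> m <= 1 -> subdist mu.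
Proof.
  intros H1 H2 H3. split; [exact H1|]. intros l Hl. pose proof (has_sum_ub mu m l H2 Hl). unfold lsum, fsum in *. lra.
Qed.

Lemma subdist_le1 mu s : subdist mu -> mu s <= 1.
Proof.
  intros H. destruct (subdist_mass mu H) as [m [Hm Hm1]].
  pose proof (has_sum_term_le mu m s Hm). lra.
Qed.

Lemma subdist_dominated nu mu : nonneg_fun nu -> (forall s, nu s <= mu s) -> subdist mu -> subdist nu.
Proof.
  intros H1 H2 [_ H3]. split; auto. intros l Hl.
  apply Rle_trans with (fsum mu l); [apply fsum_le; auto|apply H3; auto].
Qed.

Lemma subdist_zero : subdist (fun _ : nexp Act => 0).
Proof. apply (subdist_of_mass _ 0); [intros _; lra|apply has_sum_zero|lra]. Qed.

Lemma subdist_delta E : subdist (delta E).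
Proof. apply (subdist_of_mass _ 1); [apply delta_full_dist|apply delta_full_dist|lra]. Qed.

Lemma subdist_summands T X Y : subdist T -> nonneg_fun X -> nonneg_fun Y ->
  (forall s, X s + Y s = T s) -> subdist X /\ subdist Y.
Proof.
  intros HT HX HY E. split; apply subdist_dominated with T; auto;
    intros s; rewrite <- E; [pose proof (HY s)|pose proof (HX s)]; lra.
Qed.

Lemma weighted_nonneg (p : nat -> R) (nus : nat -> subd Act) i s :
  0 <= p i -> (p i = 0 \/ nonneg_fun (nus i)) -> 0 <= p i * nus i s.
Proof. intros H [E|E]; [rewrite E; lra|apply Rmult_le_pos; auto]. Qed.

Lemma is_wsum_has_sum (p : nat -> R) (mus : nat -> subd Act) mu : (forall i s, 0 <= p i * mus i s) ->
  (is_wsum p mus mu <-> forall s, has_sum (fun i => p i * mus i s) (mu s)).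
Proof.
  intros H. unfold is_wsum. split; intros H1 s; apply infinite_sum_has_sum; auto; intros i; apply H.
Qed.

Lemma weights_has_sum p : weights p -> exists S, has_sum p S /\ S <= 1.
Proof.
  intros [H1 H2]. apply has_sum_nat_bounded; auto.
  intros [|n]; [simpl; lra|]. rewrite <- sum_f_R0_fsum. apply H2.
Qed.

Lemma has_sum_weighted_subdist (p : nat -> R) (nus : nat -> subd Act) Sp s :
  (forall i, 0 <= p i) -> (forall i, p i = 0 \/ subdist (nus i)) -> has_sum p Sp ->
  exists x, has_sum (fun i => p i * nus i s) x.
Proof.
  intros Hp Hn HS. destruct (has_sum_dominated (fun i => p i * nus i s) p Sp) as [x [Hx _]]; eauto.
  intros i. destruct (Hn i) as [Z|Z]; [rewrite Z; lra|].
  pose proof (subdist_le1 _ s Z). pose proof (subdist_nonneg _ Z s). specialize (Hp i). nra.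
Qed.

Lemma wsum_subdist (p : nat -> R) (nus : nat -> subd Act) nu : weights p ->
  (forall i, p i = 0 \/ subdist (nus i)) ->
  (forall s, has_sum (fun i => p i * nus i s) (nu s)) -> subdist nu.
Proof.
  intros Hw Hn Hs.
  assert (Hnn : forall i s, 0 <= p i * nus i s).
  { intros i s. apply weighted_nonneg; [apply Hw|]. destruct (Hn i); auto. right; apply subdist_nonneg; auto. }
  destruct (weights_has_sum p Hw) as [S [HS HS1]].
  split.
  - intros s. eapply has_sum_nonneg; eauto.
  - intros l Hl.
    assert (H : has_sum (fun i => fsum (fun u => p i * nus i u) l) (fsum nu l)) by (apply has_sum_fsum; auto).
    enough (fsum nu l <= S) by (unfold lsum, fsum in *; lra).
    apply (has_sum_le _ p _ _) with (2 := H); auto.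
    intros i. rewrite fsum_scal. destruct (Hn i) as [E|[_ E]]; [rewrite E; lra|].
    specialize (E l Hl). pose proof (proj1 Hw i).
    apply Rle_trans with (p i * 1); [|lra]. apply Rmult_le_compat_l; auto.
Qed.

Definition wsum_of (p : nat -> R) (nus : nat -> subd Act) : subd Act :=
  fun s => sum_of (fun i => p i * nus i s).

Lemma wsum_of_spec (p : nat -> R) (nus : nat -> subd Act) : weights p ->
  (forall i, p i = 0 \/ subdist (nus i)) -> forall s, has_sum (fun i => p i * nus i s) (wsum_of p nus s).
Proof.
  intros Hw Hn s. destruct (weights_has_sum p Hw) as [S [HS _]].
  apply sum_of_spec, (has_sum_weighted_subdist p nus S); auto. apply Hw.
Qed.

Lemma wsum_of_subdist (p : nat -> R) (nus : nat -> subd Act) : weights p ->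
  (forall i, p i = 0 \/ subdist (nus i)) -> subdist (wsum_of p nus).
Proof. intros Hw Hn. apply (wsum_subdist p nus); auto. apply wsum_of_spec; auto. Qed.

Lemma is_wsum_of (p : nat -> R) (nus : nat -> subd Act) : weights p ->
  (forall i, p i = 0 \/ subdist (nus i)) -> is_wsum p nus (wsum_of p nus).
Proof.
  intros Hw Hn. apply is_wsum_has_sum; [|apply wsum_of_spec; auto].
  intros i s. apply weighted_nonneg; [apply Hw|]. destruct (Hn i); auto. right; apply subdist_nonneg; auto.
Qed.

Lemma pstep_full_dist (P : pexp Act) mu : pstep P mu -> full_dist mu.
Proof.
  induction 1 as [E|P Q [p Hp] mu nu _ [A1 B1] _ [A2 B2]]; [apply delta_full_dist|]. simpl.
  assert (N1 : nonneg_fun (fun s => p * mu s)) by (intros s; specialize (A1 s); nra).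
  assert (N2 : nonneg_fun (fun s => (1 - p) * nu s)) by (intros s; specialize (A2 s); nra).
  split; [intros s; specialize (N1 s); specialize (N2 s); simpl in *; lra|].
  pose proof (has_sum_plus _ _ _ _ N1 N2 (has_sum_scal mu p 1 ltac:(lra) B1)
    (has_sum_scal nu (1 - p) 1 ltac:(lra) B2)) as H.
  replace (p * 1 + (1 - p) * 1) with 1 in H by ring. exact H.
Qed.

Lemma nstep_full_dist E a mu : nstep E a mu -> full_dist mu.
Proof. induction 1; auto. eapply pstep_full_dist; eauto. Qed.

End Subdistributions.

Section Liftings.
Context {Act : Type}.
Implicit Types (nu mu : subd Act).

(* Combined transitions and lifted relations are both liftings: [cstep_lifting], [lift_lifting]. *)
Definition lifting (P : nexp Act -> subd Act -> Prop) nu mu : Prop :=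
  exists (c : nat -> R) (E : nat -> nexp Act) (M : nat -> subd Act),
    (forall k, 0 <= c k) /\ (forall k, c k = 0 \/ P (E k) (M k)) /\
    (forall s, has_sum (fun k => c k * delta (E k) s) (nu s)) /\
    (forall s, has_sum (fun k => c k * M k s) (mu s)).

Variable P : nexp Act -> subd Act -> Prop.
Hypothesis P_full : forall E M, P E M -> full_dist M.

Lemma lifting_terms (c : nat -> R) (E : nat -> nexp Act) (M : nat -> subd Act) :
  (forall k, 0 <= c k) -> (forall k, c k = 0 \/ P (E k) (M k)) ->
  (forall k s, 0 <= c k * delta (E k) s) /\ (forall k s, 0 <= c k * M k s) /\
  (forall k, has_sum (fun s => c k * delta (E k) s) (c k)) /\ (forall k, has_sum (fun s => c k * M k s) (c k)).
Proof.
  intros Hc HcP. split; [|split; [|split]].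
  - intros k s. apply Rmult_le_pos; auto. apply delta_full_dist.
  - intros k s. destruct (HcP k) as [Z|Z]; [rewrite Z; lra|].
    apply Rmult_le_pos; auto. apply (P_full _ _ Z).
  - intros k. apply has_sum_scal_1; auto. apply delta_full_dist.
  - intros k. destruct (HcP k) as [Z|Z].
    + rewrite Z. apply has_sum_ext with (fun _ => 0); [intros; lra|apply has_sum_zero].
    + apply has_sum_scal_1; auto. apply (P_full _ _ Z).
Qed.

Lemma lifting_nonneg nu mu : lifting P nu mu -> nonneg_fun nu /\ nonneg_fun mu.
Proof.
  intros (c & E & M & Hc & HcP & Hs & Ht). destruct (lifting_terms c E M Hc HcP) as (A & B & _ & _).
  split; intros s; eapply has_sum_nonneg; eauto.
Qed.

(* Both sides have the mass [sum_k c_k]. *)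
Lemma lifting_mass nu mu m : lifting P nu mu -> (has_sum nu m <-> has_sum mu m).
Proof.
  intros (c & E & M & Hc & HcP & Hs & Ht). destruct (lifting_terms c E M Hc HcP) as (A & B & C & D).
  transitivity (has_sum c m).
  - symmetry. apply (has_sum_rows_cols_iff (fun k s => c k * delta (E k) s)); auto.
  - apply (has_sum_rows_cols_iff (fun k s => c k * M k s)); auto.
Qed.

Lemma lifting_subdist nu mu : lifting P nu mu -> subdist nu -> subdist mu.
Proof.
  intros H Hs. destruct (subdist_mass nu Hs) as [m [Hm Hm1]].
  apply subdist_of_mass with m; auto. apply (lifting_nonneg _ _ H). apply (lifting_mass _ _ _ H); auto.
Qed.

Lemma lifting_zero nu mu : lifting P nu mu -> (forall s, nu s = 0) -> forall s, mu s = 0.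
Proof.
  intros H Z s. apply (has_sum_0_inv mu); [apply (lifting_nonneg _ _ H)|].
  apply (lifting_mass _ _ _ H). apply has_sum_ext with (fun _ => 0); auto. apply has_sum_zero.
Qed.

Lemma lifting_weights nu mu : lifting P nu mu -> subdist nu ->
  exists c E M, weights c /\ (forall k, c k = 0 \/ P (E k) (M k)) /\
    (forall s, has_sum (fun k => c k * delta (E k) s) (nu s)) /\
    (forall s, has_sum (fun k => c k * M k s) (mu s)).
Proof.
  intros H Hs. pose proof H as (c & E & M & Hc & HcP & Hs1 & Ht).
  exists c, E, M. split; auto. split; auto.
  destruct (subdist_mass nu Hs) as [m [Hm Hm1]].
  destruct (lifting_terms c E M Hc HcP) as (A & B & C & D).
  assert (Hcm : has_sum c m) by (apply (has_sum_rows_cols_iff (fun k s => c k * delta (E k) s) c nu m); auto).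
  intros n. rewrite sum_f_R0_fsum. pose proof (has_sum_ub c m _ Hcm (seq_NoDup (S n) 0)). lra.
Qed.

Lemma lifting_single E M : P E M -> lifting P (delta E) M.
Proof.
  intros H. pose (c := fun k : nat => if Nat.eq_dec k 0 then 1 else 0).
  assert (Hc : forall k, 0 <= c k) by (intros k; unfold c; destruct Nat.eq_dec; lra).
  assert (Hc0 : forall k, k <> 0%nat -> c k = 0) by (intros k Hk; unfold c; destruct Nat.eq_dec; tauto).
  assert (Hc1 : c 0%nat = 1) by reflexivity.
  exists c, (fun _ => E), (fun _ => M). pose proof (P_full E M H) as [HM _].
  split; [exact Hc|split; [|split]].
  - intros k. destruct (Nat.eq_dec k 0) as [->|Hk]; auto.
  - intros s. apply (has_sum_single _ 0%nat).
    + intros k. apply Rmult_le_pos; auto. apply delta_full_dist.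
    + intros k Hk. rewrite Hc0; auto. ring.
    + rewrite Hc1. ring.
  - intros s. apply (has_sum_single _ 0%nat).
    + intros k. apply Rmult_le_pos; auto.
    + intros k Hk. rewrite Hc0; auto. ring.
    + rewrite Hc1. ring.
Qed.

Lemma lifting_scale a nu mu : 0 <= a -> lifting P nu mu ->
  lifting P (fun s => a * nu s) (fun s => a * mu s).
Proof.
  intros Ha (c & E & M & Hc & HcP & Hs & Ht). exists (fun k => a * c k), E, M.
  split; [|split; [|split]].
  - intros k. apply Rmult_le_pos; auto.
  - intros k. destruct (HcP k) as [Z|Z]; [left; rewrite Z; ring|right; auto].
  - intros s. apply has_sum_ext with (fun k => a * (c k * delta (E k) s)); [intros; ring|].
    apply has_sum_scal; auto.
  - intros s. apply has_sum_ext with (fun k => a * (c k * M k s)); [intros; ring|].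
    apply has_sum_scal; auto.
Qed.

(* Splitting [nu] pointwise by the ratios [r i s] splits every term [c_k M_k] by [r i (E k)]. *)
Lemma lifting_split nu mu (r : nat -> nexp Act -> R) : lifting P nu mu -> partition_of_unity r ->
  exists mus : nat -> subd Act, (forall i, lifting P (fun s => r i s * nu s) (mus i)) /\
    (forall s, has_sum (fun i => mus i s) (mu s)).
Proof.
  intros (c & E & M & Hc & HcP & Hs & Ht) [Hr Hr1].
  destruct (lifting_terms c E M Hc HcP) as (_ & B & _ & _).
  assert (Hr2 : forall i s, r i s <= 1) by (intros i s; apply partition_of_unity_le1; split; auto).
  assert (Hnn : forall i k s, 0 <= c k * r i (E k) * M k s).
  { intros i k s. replace (c k * r i (E k) * M k s) with (r i (E k) * (c k * M k s)) by ring.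
    apply Rmult_le_pos; auto. }
  assert (Hex : forall i s, exists x, has_sum (fun k => c k * r i (E k) * M k s) x).
  { intros i s. destruct (has_sum_dominated (fun k => c k * r i (E k) * M k s) (fun k => c k * M k s) (mu s))
      as [x [Hx _]]; eauto.
    intros k. specialize (B k s). specialize (Hr2 i (E k)).
    replace (c k * r i (E k) * M k s) with (r i (E k) * (c k * M k s)) by ring. nra. }
  exists (fun i s => sum_of (fun k => c k * r i (E k) * M k s)). split.
  - intros i. exists (fun k => c k * r i (E k)), E, M. split; [|split; [|split]].
    + intros k. apply Rmult_le_pos; auto.
    + intros k. destruct (HcP k) as [Z|Z]; [left; rewrite Z; ring|right; auto].
    + intros s. apply has_sum_ext with (fun k => r i s * (c k * delta (E k) s)).
      * intros k. destruct (classic (s = E k)) as [->|Hne]; [ring|rewrite delta_other; auto; ring].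
      * apply has_sum_scal; auto.
    + intros s. apply sum_of_spec. auto.
  - intros s.
    assert (Hcol : forall k, has_sum (fun i => c k * r i (E k) * M k s) (c k * M k s)).
    { intros k. apply has_sum_ext with (fun i => (c k * M k s) * r i (E k)); [intros; ring|].
      apply has_sum_scal_1; auto. }
    destruct (has_sum_cols_of_rows (fun k i => c k * r i (E k) * M k s) (fun k => c k * M k s) (mu s))
      as [h [Hh1 Hh2]]; auto.
    apply has_sum_ext with h; auto. intros i. symmetry. apply sum_of_eq. apply Hh1.
Qed.

Lemma lifting_of_pairs (d : nat -> nat -> R) (E : nat -> nat -> nexp Act) (M : nat -> nat -> subd Act) nu mu :
  (forall i k, 0 <= d i k) -> (forall i k, d i k = 0 \/ P (E i k) (M i k)) ->
  (forall s, has_sum (uncurry (fun i k => d i k * delta (E i k) s)) (nu s)) ->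
  (forall s, has_sum (uncurry (fun i k => d i k * M i k s)) (mu s)) ->
  lifting P nu mu.
Proof.
  intros Hd HdP Hnu Hmu.
  assert (A : forall i k s, 0 <= d i k * delta (E i k) s).
  { intros i k s. apply Rmult_le_pos; auto. apply delta_full_dist. }
  assert (B : forall i k s, 0 <= d i k * M i k s).
  { intros i k s. destruct (HdP i k) as [Z|Z]; [rewrite Z; lra|]. apply Rmult_le_pos; auto. apply (P_full _ _ Z). }
  set (pr := Cantor.of_nat).
  assert (Hinj : Injective pr).
  { intros a b Hab. rewrite <- (Cantor.cancel_to_of a), <- (Cantor.cancel_to_of b). unfold pr in Hab.
    rewrite Hab. auto. }
  assert (Hre : forall g : nat * nat -> R, nonneg_fun g -> forall S, has_sum g S -> has_sum (fun n => g (pr n)) S).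
  { intros g Hg S HS. apply (has_sum_reindex pr g S Hg Hinj); auto.
    intros q _. exists (Cantor.to_nat q). apply Cantor.cancel_of_to. }
  exists (fun n => uncurry d (pr n)), (fun n => uncurry E (pr n)), (fun n => uncurry M (pr n)).
  split; [intros n; destruct (pr n); apply Hd|split; [intros n; destruct (pr n); apply HdP|split]].
  - intros s. apply has_sum_ext with (fun n => uncurry (fun i k => d i k * delta (E i k) s) (pr n));
      [intros n; destruct (pr n); reflexivity|].
    apply Hre; auto. intros [i k]; apply A.
  - intros s. apply has_sum_ext with (fun n => uncurry (fun i k => d i k * M i k s) (pr n));
      [intros n; destruct (pr n); reflexivity|].
    apply Hre; auto. intros [i k]; apply B.
Qed.

Lemma lifting_scaled_family (p : nat -> R) (nus mus : nat -> subd Act) :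
  (forall i, 0 <= p i) -> (forall i, p i = 0 \/ lifting P (nus i) (mus i)) ->
  exists (d : nat -> nat -> R) (E : nat -> nat -> nexp Act) (M : nat -> nat -> subd Act),
    forall i, (forall k, 0 <= d i k) /\ (forall k, d i k = 0 \/ P (E i k) (M i k)) /\
      (forall s, has_sum (fun k => d i k * delta (E i k) s) (p i * nus i s)) /\
      (forall s, has_sum (fun k => d i k * M i k s) (p i * mus i s)).
Proof.
  intros Hp Hl.
  destruct (choice (fun i (x : (nat -> R) * (nat -> nexp Act) * (nat -> subd Act)) =>
    let '(d, E, M) := x in (forall k, 0 <= d k) /\ (forall k, d k = 0 \/ P (E k) (M k)) /\
      (forall s, has_sum (fun k => d k * delta (E k) s) (p i * nus i s)) /\
      (forall s, has_sum (fun k => d k * M k s) (p i * mus i s)))) as [f Hf].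
  { intros i. destruct (Hl i) as [Z|L].
    - exists (fun _ => 0, fun _ => NNil, fun _ _ => 0). rewrite Z.
      split; [intros; lra|split; [auto|split; intros s;
        apply has_sum_ext with (fun _ => 0); try (intros; ring); rewrite Rmult_0_l; apply has_sum_zero]].
    - destruct (lifting_scale (p i) _ _ (Hp i) L) as (d & E & M & H). exists (d, E, M). exact H. }
  exists (fun i => fst (fst (f i))), (fun i => snd (fst (f i))), (fun i => snd (f i)).
  intros i. specialize (Hf i). destruct (f i) as [[d E] M]. exact Hf.
Qed.

Lemma lifting_comb (p : nat -> R) (nus mus : nat -> subd Act) nu m :
  (forall i, 0 <= p i) -> (forall i, p i = 0 \/ lifting P (nus i) (mus i)) ->
  (forall s, has_sum (fun i => p i * nus i s) (nu s)) -> has_sum nu m ->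
  exists mu, (forall s, has_sum (fun i => p i * mus i s) (mu s)) /\ lifting P nu mu.
Proof.
  intros Hp Hl Hnu Hm.
  destruct (lifting_scaled_family p nus mus Hp Hl) as (d & E & M & HH).
  assert (Hd : forall i k, 0 <= d i k) by apply HH.
  assert (HdP : forall i k, d i k = 0 \/ P (E i k) (M i k)) by apply HH.
  assert (A : forall i k s, 0 <= d i k * delta (E i k) s).
  { intros i k s. apply Rmult_le_pos; auto. apply delta_full_dist. }
  assert (B : forall i k s, 0 <= d i k * M i k s).
  { intros i k s. destruct (HdP i k) as [Z|Z]; [rewrite Z; lra|]. apply Rmult_le_pos; auto. apply (P_full _ _ Z). }
  assert (Hsrc : forall s, has_sum (uncurry (fun i k => d i k * delta (E i k) s)) (nu s)).
  { intros s. apply (has_sum_pairs_of_rows _ (fun i k => A i k s) (fun i => p i * nus i s)); auto.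
    intros i. apply HH. }
  assert (Hw : has_sum (uncurry d) m).
  { apply (has_sum_rows_cols_iff (fun q s => uncurry (fun i k => d i k * delta (E i k) s) q) (uncurry d) nu m); auto.
    - intros [i k] s; apply A.
    - intros [i k]. apply has_sum_scal_1; [apply Hd|apply delta_full_dist]. }
  assert (Htgt : forall s, exists x, has_sum (uncurry (fun i k => d i k * M i k s)) x).
  { intros s. destruct (has_sum_dominated (uncurry (fun i k => d i k * M i k s)) (uncurry d) m) as [x [Hx _]]; eauto.
    intros [i k]. simpl. destruct (HdP i k) as [Z|Z]; [rewrite Z; lra|].
    destruct (P_full _ _ Z) as [HM1 HM2]. pose proof (has_sum_term_le _ _ s HM2). specialize (Hd i k).
    specialize (HM1 s). nra. }
  exists (fun s => sum_of (uncurry (fun i k => d i k * M i k s))). split.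
  - intros s. pose proof (sum_of_spec _ (Htgt s)) as H1.
    destruct (has_sum_rows_of_pairs (fun i k => d i k * M i k s) (fun i k => B i k s) _ H1) as [h [Hh1 Hh2]].
    apply has_sum_ext with h; auto. intros i. eapply has_sum_unique; [apply Hh1|apply HH].
  - apply (lifting_of_pairs d E M); auto. intros s. apply sum_of_spec; auto.
Qed.

Lemma lifting_comb_eq (p : nat -> R) (nus mus : nat -> subd Act) nu mu m :
  (forall i, 0 <= p i) -> (forall i, p i = 0 \/ lifting P (nus i) (mus i)) ->
  (forall s, has_sum (fun i => p i * nus i s) (nu s)) ->
  (forall s, has_sum (fun i => p i * mus i s) (mu s)) -> has_sum nu m ->
  lifting P nu mu.
Proof.
  intros Hp Hl H1 H2 Hm. destruct (lifting_comb p nus mus nu m Hp Hl H1 Hm) as [mu' [A B]].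
  replace mu with mu'; auto. apply functional_extensionality. intros s. eapply has_sum_unique; eauto.
Qed.

End Liftings.

Section CombinedTransitions.
Context {Act : Type}.
Implicit Types (nu mu : subd Act) (Rel : nexp Act -> nexp Act -> Prop).

(* The generated induction principles give no induction hypothesis for the premises nested
   under the disjunction [p i = 0 \/ _]. *)
Fixpoint cstep_nested_ind (Q : subd Act -> Act -> subd Act -> Prop)
  (Hb : forall E a mu, nstep E a mu -> Q (delta E) a mu)
  (Hc : forall a p nus mus nu mu, weights p ->
        (forall i, p i = 0 \/ (cstep (nus i) a (mus i) /\ Q (nus i) a (mus i))) ->
        is_wsum p nus nu -> is_wsum p mus mu -> Q nu a mu)
  nu a mu (H : cstep nu a mu) {struct H} : Q nu a mu :=
  match H with
  | @cstep_base _ E a mu Hn => Hb E a mu Hn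
  | @cstep_comb _ a p nus mus nu mu Hw Hi Hn Hm =>
      Hc a p nus mus nu mu Hw (fun i => match Hi i with
                                        | or_introl e => or_introl e
                                        | or_intror c => or_intror (conj c (cstep_nested_ind Q Hb Hc _ _ _ c))
                                        end) Hn Hm
  end.

Fixpoint lift_nested_ind Rel (Q : subd Act -> subd Act -> Prop)
  (Hb : forall E F, Rel E F -> Q (delta E) (delta F))
  (Hc : forall p mus nus mu nu, weights p ->
        (forall i, p i = 0 \/ (lift Rel (mus i) (nus i) /\ Q (mus i) (nus i))) ->
        is_wsum p mus mu -> is_wsum p nus nu -> Q mu nu)
  mu nu (H : lift Rel mu nu) {struct H} : Q mu nu :=
  match H with
  | @lift_base _ _ E F HR => Hb E F HR
  | @lift_comb _ _ p mus nus mu nu Hw Hi Hn Hm =>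
      Hc p mus nus mu nu Hw (fun i => match Hi i with
                                      | or_introl e => or_introl e
                                      | or_intror c => or_intror (conj c (lift_nested_ind Rel Q Hb Hc _ _ c))
                                      end) Hn Hm
  end.

Definition step_rel (a : Act) : nexp Act -> subd Act -> Prop := fun E M => nstep E a M.

Definition dirac_rel Rel : nexp Act -> subd Act -> Prop := fun E M => exists F, Rel E F /\ M = delta F.

Lemma step_rel_full a E M : step_rel a E M -> full_dist M.
Proof. apply nstep_full_dist. Qed.

Lemma dirac_rel_full Rel E M : dirac_rel Rel E M -> full_dist M.
Proof. intros [F [_ ->]]. apply delta_full_dist. Qed.

Lemma lifting_wsum P (P_full : forall E M, P E M -> full_dist M) (p : nat -> R) (nus mus : nat -> subd Act) nu mu :
  weights p -> (forall i, p i = 0 \/ (lifting P (nus i) (mus i) /\ subdist (nus i))) ->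
  is_wsum p nus nu -> is_wsum p mus mu -> lifting P nu mu /\ subdist nu.
Proof.
  intros Hw H Hn Hm.
  assert (Nn : forall i s, 0 <= p i * nus i s).
  { intros i s. apply weighted_nonneg; [apply Hw|].
    destruct (H i) as [Z|[G _]]; [auto|right; apply (lifting_nonneg P P_full _ _ G)]. }
  assert (Nm : forall i s, 0 <= p i * mus i s).
  { intros i s. apply weighted_nonneg; [apply Hw|].
    destruct (H i) as [Z|[G _]]; [auto|right; apply (lifting_nonneg P P_full _ _ G)]. }
  pose proof (proj1 (is_wsum_has_sum p nus nu Nn) Hn) as Hnu.
  pose proof (proj1 (is_wsum_has_sum p mus mu Nm) Hm) as Hmu.
  assert (Hs : subdist nu).
  { apply (wsum_subdist p nus nu Hw); auto. intros i; destruct (H i) as [Z|[_ Z]]; auto. }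
  split; auto. destruct (subdist_mass nu Hs) as [m [Hm1 _]].
  apply (lifting_comb_eq P P_full p nus mus nu mu m); auto; [apply Hw|].
  intros i; destruct (H i) as [Z|[Z _]]; auto.
Qed.

Lemma cstep_lifting nu a mu : cstep nu a mu -> lifting (step_rel a) nu mu /\ subdist nu.
Proof.
  revert nu a mu. apply cstep_nested_ind.
  - intros E a mu H. split; [apply lifting_single; [apply step_rel_full|exact H]|apply subdist_delta].
  - intros a p nus mus nu mu Hw H Hn Hm. apply (lifting_wsum _ (step_rel_full a) p nus mus); auto.
    intros i; destruct (H i) as [Z|[_ Z]]; auto.
Qed.

Lemma lifting_cstep nu a mu : lifting (step_rel a) nu mu -> subdist nu -> cstep nu a mu.
Proof.
  intros H Hs. destruct (lifting_weights _ (step_rel_full a) nu mu H Hs) as (c & E & M & Hw & HcP & H1 & H2).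
  destruct (lifting_terms _ (step_rel_full a) c E M (proj1 Hw) HcP) as (A & B & _ & _).
  apply (@cstep_comb _ a c (fun k => delta (E k)) M); auto.
  - intros k. destruct (HcP k); auto. right. apply cstep_base; auto.
  - apply is_wsum_has_sum; auto.
  - apply is_wsum_has_sum; auto.
Qed.

Lemma lift_lifting Rel nu mu : lift Rel nu mu -> lifting (dirac_rel Rel) nu mu /\ subdist nu.
Proof.
  revert nu mu. apply lift_nested_ind.
  - intros E F H. split; [|apply subdist_delta].
    apply lifting_single; [apply dirac_rel_full|]. exists F; auto.
  - intros p mus nus mu nu Hw H Hn Hm. apply (lifting_wsum _ (dirac_rel_full Rel) p mus nus); auto.
    intros i; destruct (H i) as [Z|[_ Z]]; auto.
Qed.

Lemma lifting_lift Rel nu mu : lifting (dirac_rel Rel) nu mu -> subdist nu -> lift Rel nu mu.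
Proof.
  intros H Hs. destruct (lifting_weights _ (dirac_rel_full Rel) nu mu H Hs) as (c & E & M & Hw & HcP & H1 & H2).
  destruct (lifting_terms _ (dirac_rel_full Rel) c E M (proj1 Hw) HcP) as (A & B & _ & _).
  apply (@lift_comb _ Rel c (fun k => delta (E k)) M); auto.
  - intros k. destruct (HcP k) as [Z|[F [HF ->]]]; auto. right. apply lift_base; auto.
  - apply is_wsum_has_sum; auto.
  - apply is_wsum_has_sum; auto.
Qed.

Lemma lift_flip Rel nu mu : lift Rel nu mu -> lift (fun x y => Rel y x) mu nu.
Proof.
  revert nu mu. apply lift_nested_ind.
  - intros E F H. apply lift_base; auto.
  - intros p mus nus mu nu Hw H Hn Hm. apply (@lift_comb _ _ p nus mus); auto.
    intros i; destruct (H i) as [Z|[_ Z]]; auto.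
Qed.

Lemma lift_mono Rel Rel' nu mu : (forall x y, Rel x y -> Rel' x y) -> lift Rel nu mu -> lift Rel' nu mu.
Proof.
  intros HR. revert nu mu. apply lift_nested_ind.
  - intros E F H. apply lift_base; auto.
  - intros p mus nus mu nu Hw H Hn Hm. apply (@lift_comb _ _ p mus nus); auto.
    intros i; destruct (H i) as [Z|[_ Z]]; auto.
Qed.

Lemma lift_subdist Rel nu mu : lift Rel nu mu -> subdist nu /\ subdist mu.
Proof.
  intros H. split; [apply (lift_lifting _ _ _ H)|]. apply lift_flip in H. apply (lift_lifting _ _ _ H).
Qed.

Lemma lift_mass Rel nu mu m : lift Rel nu mu -> (has_sum nu m <-> has_sum mu m).
Proof. intros H. apply (lifting_mass _ (dirac_rel_full Rel)), (lift_lifting _ _ _ H). Qed.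

Lemma lift_support Rel nu mu s : lift Rel nu mu -> nu s <> 0 -> exists F, Rel s F.
Proof.
  intros H Hs. destruct (lift_lifting _ _ _ H) as [(c & E & M & Hc & HcP & H1 & H2) _].
  apply NNPP. intros Hn. apply Hs. apply (has_sum_unique _ _ _ (H1 s)).
  apply has_sum_ext with (fun _ => 0); [|apply has_sum_zero].
  intros k. destruct (HcP k) as [Z|[F [HF _]]]; [rewrite Z; ring|].
  destruct (classic (s = E k)) as [->|Hne]; [exfalso; eauto|]. rewrite delta_other; auto. ring.
Qed.

Lemma has_sum_first_two (g : nat -> R) : nonneg_fun g -> (forall i, (2 <= i)%nat -> g i = 0) ->
  has_sum g (g 0%nat + g 1%nat).
Proof.
  intros Hg H. replace (g 0%nat + g 1%nat) with (fsum g (0 :: 1 :: nil)%nat) by (simpl; ring).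
  apply has_sum_finite_support; auto.
  - repeat constructor; simpl; intuition lia.
  - intros [|[|i]] Hi; [exfalso; apply Hi; simpl; auto|exfalso; apply Hi; simpl; auto|apply H; lia].
Qed.

Lemma lift_split_sum Rel nu m1 m2 : lift Rel nu (fun s => m1 s + m2 s) -> nonneg_fun m1 -> nonneg_fun m2 ->
  exists nu1 nu2, (forall s, nu s = nu1 s + nu2 s) /\ lift Rel nu1 m1 /\ lift Rel nu2 m2.
Proof.
  intros H H1 H2. pose proof (proj2 (lift_subdist _ _ _ H)) as Hm.
  apply lift_flip, lift_lifting in H. destruct H as [L _].
  set (ms := fun (i : nat) s => match i with 0%nat => m1 s | 1%nat => m2 s | _ => 0 end).
  assert (Hms : forall i s, 0 <= ms i s) by (intros [|[|i]] s; simpl; auto; lra).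
  destruct (partition_of_unity_ratio ms (fun s => m1 s + m2 s) Hms) as [r [Hr Hrm]].
  { intros s. apply (has_sum_first_two (fun i => ms i s)); [intros i; apply Hms|intros [|[|i]]; simpl; lia || auto]. }
  destruct (lifting_split _ (dirac_rel_full _) _ _ r L Hr) as [nus [Hl Hsum]].
  assert (Hl' : forall i, lifting (dirac_rel (fun x y => Rel y x)) (ms i) (nus i)).
  { intros i. replace (ms i) with (fun s => r i s * (m1 s + m2 s)); auto.
    apply functional_extensionality; auto. }
  assert (Hsd : forall i, subdist (ms i)).
  { intros i. apply subdist_dominated with (fun s => m1 s + m2 s); auto; [intros s; apply Hms|].
    intros s. specialize (H1 s). specialize (H2 s). destruct i as [|[|i]]; simpl; lra. }
  exists (nus 0%nat), (nus 1%nat). split; [|split].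
  - intros s. apply (has_sum_unique _ _ _ (Hsum s)). apply has_sum_first_two.
    + intros i. apply (lifting_nonneg _ (dirac_rel_full _) _ _ (Hl' i)).
    + intros [|[|i]] Hi; try lia. apply (lifting_zero _ (dirac_rel_full _) _ _ (Hl' (S (S i)))). reflexivity.
  - apply lift_flip, lifting_lift; [apply (Hl' 0%nat)|apply (Hsd 0%nat)].
  - apply lift_flip, lifting_lift; [apply (Hl' 1%nat)|apply (Hsd 1%nat)].
Qed.

Lemma cstep_subdist nu a mu : cstep nu a mu -> subdist nu /\ subdist mu.
Proof.
  intros H. destruct (cstep_lifting _ _ _ H) as [L S]. split; auto.
  apply (lifting_subdist _ (step_rel_full a) _ _ L S).
Qed.

Lemma cstep_mass nu a mu m : cstep nu a mu -> (has_sum nu m <-> has_sum mu m).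
Proof. intros H. apply (lifting_mass _ (step_rel_full a)), (cstep_lifting _ _ _ H). Qed.

Lemma cstep_zero a : cstep (fun _ : nexp Act => 0) a (fun _ => 0).
Proof.
  assert (Z : forall s, has_sum (fun i : nat => 0 * 0) ((fun _ : nexp Act => 0) s)).
  { intros s. apply has_sum_ext with (fun _ => 0); [intros; ring|apply has_sum_zero]. }
  apply (@cstep_comb _ a (fun _ => 0) (fun _ _ => 0) (fun _ _ => 0)); auto.
  - split; [intros; lra|]. intros n. rewrite sum_f_R0_fsum, fsum_zero. lra.
  - apply is_wsum_has_sum; auto. intros; lra.
  - apply is_wsum_has_sum; auto. intros; lra.
Qed.

Lemma cstep_split nu a mu (r : nat -> nexp Act -> R) : cstep nu a mu -> partition_of_unity r ->
  exists mus : nat -> subd Act, (forall i, cstep (fun s => r i s * nu s) a (mus i)) /\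
    (forall s, has_sum (fun i => mus i s) (mu s)).
Proof.
  intros H Hr. destruct (cstep_lifting _ _ _ H) as [L Hs].
  destruct (lifting_split _ (step_rel_full a) _ _ r L Hr) as [mus [H1 H2]]. exists mus. split; auto.
  intros i. apply lifting_cstep; auto. apply subdist_dominated with nu; auto.
  - intros s. apply Rmult_le_pos; [apply Hr|apply subdist_nonneg; auto].
  - intros s. pose proof (partition_of_unity_le1 r i s Hr). pose proof (subdist_nonneg nu Hs s).
    pose proof (proj1 Hr i s). nra.
Qed.

Lemma cstep_unscale nu a mu c : cstep (fun s => c * nu s) a mu -> c > 0 -> subdist nu ->
  cstep nu a (fun s => mu s / c).
Proof.
  intros H Hc Hs. destruct (cstep_lifting _ _ _ H) as [L _]. apply lifting_cstep; auto.
  pose proof (lifting_scale _ (/ c) _ _ (Rlt_le _ _ (Rinv_0_lt_compat _ Hc)) L) as L'.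
  replace nu with (fun s => / c * (c * nu s)).
  - replace (fun s => mu s / c) with (fun s => / c * mu s); auto.
    apply functional_extensionality; intros; unfold Rdiv; ring.
  - apply functional_extensionality; intros; field; lra.
Qed.

Lemma cstep_split_diracs mu a mu' (c : nat -> R) (F : nat -> nexp Act) : cstep mu a mu' ->
  (forall k, 0 <= c k) -> (forall s, has_sum (fun k => c k * delta (F k) s) (mu s)) ->
  exists mus : nat -> subd Act, (forall k, c k = 0 \/ cstep (delta (F k)) a (mus k)) /\
    (forall s, has_sum (fun k => c k * mus k s) (mu' s)).
Proof.
  intros H Hc Hmu.
  assert (Hn : forall k s, 0 <= c k * delta (F k) s).
  { intros k s. apply Rmult_le_pos; auto. apply delta_full_dist. }
  destruct (partition_of_unity_ratio _ mu Hn Hmu) as [r [Hr Hrm]].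
  destruct (cstep_split mu a mu' r H Hr) as [ths [Hth Hsum]].
  assert (Hck : forall k, cstep (fun s => c k * delta (F k) s) a (ths k)).
  { intros k. replace (fun s => c k * delta (F k) s) with (fun s => r k s * mu s); auto.
    apply functional_extensionality; auto. }
  assert (Hunit : forall k s, c k * (ths k s / c k) = ths k s).
  { intros k s. destruct (Req_dec (c k) 0) as [Z|Z]; [|field; auto].
    destruct (cstep_lifting _ _ _ (Hck k)) as [Lk _].
    rewrite Z, (lifting_zero _ (step_rel_full a) _ _ Lk); [ring|]. intros s'. rewrite Z. ring. }
  exists (fun k s => ths k s / c k). split.
  - intros k. destruct (Req_dec (c k) 0) as [Z|Z]; auto. right.
    apply cstep_unscale; [apply Hck|specialize (Hc k); lra|apply subdist_delta].
  - intros s. apply has_sum_ext with (fun k => ths k s); auto.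
Qed.

End CombinedTransitions.

Section WeakTransitions.
Context {Act : Type} (tau : Act).
Implicit Types (rho th nu mu : subd Act) (mto mx : nat -> subd Act).

Definition derivation mto mx : Prop :=
  (forall i, subdist (mto i) /\ subdist (mx i)) /\
  (forall i, cstep (mto i) tau (fun s => mto (S i) s + mx (S i) s)).

Lemma weak_tau_iff rho th : weak_tau tau rho th <->
  exists mto mx, derivation mto mx /\ (forall s, rho s = mto 0%nat s + mx 0%nat s) /\
    (forall s, has_sum (fun i => mx i s) (th s)).
Proof.
  split.
  - intros (mto & mx & H1 & H2 & H3 & H4). exists mto, mx. split; [split; auto|split].
    + intros s; rewrite H3; auto.
    + intros s. apply infinite_sum_has_sum; auto. intros i. apply subdist_nonneg, H1.
  - intros (mto & mx & [H1 H2] & H3 & H4). exists mto, mx. split; [auto|split; [auto|split]].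
    + apply functional_extensionality; auto.
    + intros s. apply infinite_sum_has_sum; auto. intros i. apply subdist_nonneg, H1.
Qed.

Lemma derivation_zero : derivation (fun _ _ => 0) (fun _ _ => 0).
Proof.
  split; [intros; split; apply subdist_zero|]. intros i.
  replace (fun _ : nexp Act => 0 + 0) with (fun _ : nexp Act => 0) by (apply functional_extensionality; intros; ring).
  apply cstep_zero.
Qed.

Lemma weak_tau_refl rho : subdist rho -> weak_tau tau rho rho.
Proof.
  intros H. apply weak_tau_iff.
  exists (fun _ _ => 0), (fun i => match i with 0%nat => rho | _ => fun _ => 0 end).
  split; [split|split].
  - intros [|i]; split; auto using subdist_zero.
  - apply derivation_zero.
  - intros s; simpl; lra.
  - intros s. apply (has_sum_single _ 0%nat); auto.
    + intros [|i]; [apply subdist_nonneg; auto|simpl; lra].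
    + intros [|i] Hi; [contradiction|auto].
Qed.

Lemma derivation_family (p : nat -> R) (rhos ths : nat -> subd Act) :
  (forall i, p i = 0 \/ weak_tau tau (rhos i) (ths i)) ->
  exists mto mx : nat -> nat -> subd Act, forall i, derivation (mto i) (mx i) /\
    (p i <> 0 -> (forall s, rhos i s = mto i 0%nat s + mx i 0%nat s) /\
                 (forall s, has_sum (fun t => mx i t s) (ths i s))).
Proof.
  intros H.
  destruct (choice (fun i (x : (nat -> subd Act) * (nat -> subd Act)) => derivation (fst x) (snd x) /\
    (p i <> 0 -> (forall s, rhos i s = fst x 0%nat s + snd x 0%nat s) /\
                 (forall s, has_sum (fun t => snd x t s) (ths i s))))) as [f Hf].
  { intros i. destruct (H i) as [Z|W].
    - exists (fun _ _ => 0, fun _ _ => 0). split; [apply derivation_zero|tauto].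
    - apply weak_tau_iff in W. destruct W as (mto & mx & A & B & C). exists (mto, mx). simpl; auto. }
  exists (fun i => fst (f i)), (fun i => snd (f i)). auto.
Qed.

Lemma derivation_wsum (p : nat -> R) (mto mx : nat -> nat -> subd Act) : weights p ->
  (forall i, derivation (mto i) (mx i)) ->
  derivation (fun t => wsum_of p (fun i => mto i t)) (fun t => wsum_of p (fun i => mx i t)).
Proof.
  intros Hw HD.
  assert (Sto : forall t s, has_sum (fun i => p i * mto i t s) (wsum_of p (fun i => mto i t) s))
    by (intros t; apply wsum_of_spec; auto; intros i; right; apply (proj1 (HD i))).
  assert (Sx : forall t s, has_sum (fun i => p i * mx i t s) (wsum_of p (fun i => mx i t) s))
    by (intros t; apply wsum_of_spec; auto; intros i; right; apply (proj1 (HD i))).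
  assert (Nto : forall i t s, 0 <= p i * mto i t s)
    by (intros; apply Rmult_le_pos; [apply Hw|apply subdist_nonneg, (proj1 (HD i))]).
  assert (Nx : forall i t s, 0 <= p i * mx i t s)
    by (intros; apply Rmult_le_pos; [apply Hw|apply subdist_nonneg, (proj1 (HD i))]).
  split.
  - intros t. split; apply wsum_of_subdist; auto; intros i; right; apply (proj1 (HD i)).
  - intros t. apply (@cstep_comb _ tau p (fun i => mto i t) (fun i s => mto i (S t) s + mx i (S t) s)); auto.
    + intros i; right. apply (proj2 (HD i)).
    + apply is_wsum_of; auto. intros i; right; apply (proj1 (HD i)).
    + apply is_wsum_has_sum.
      * intros i s. specialize (Nto i (S t) s). specialize (Nx i (S t) s). nra.
      * intros s. apply has_sum_ext with (fun i => p i * mto i (S t) s + p i * mx i (S t) s); [intros; ring|].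
        apply has_sum_plus; auto; intros i; auto.
Qed.

Lemma weak_tau_comb (p : nat -> R) (rhos ths : nat -> subd Act) rho th : weights p ->
  (forall i, p i = 0 \/ weak_tau tau (rhos i) (ths i)) ->
  (forall s, has_sum (fun i => p i * rhos i s) (rho s)) -> (forall s, has_sum (fun i => p i * ths i s) (th s)) ->
  weak_tau tau rho th.
Proof.
  intros Hw H Hr Ht. destruct (derivation_family p rhos ths H) as (mto & mx & HD).
  assert (Hp : forall i, 0 <= p i) by apply Hw.
  assert (Sto : forall t s, has_sum (fun i => p i * mto i t s) (wsum_of p (fun i => mto i t) s))
    by (intros t; apply wsum_of_spec; auto; intros i; right; apply (proj1 (proj1 (HD i)))).
  assert (Sx : forall t s, has_sum (fun i => p i * mx i t s) (wsum_of p (fun i => mx i t) s))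
    by (intros t; apply wsum_of_spec; auto; intros i; right; apply (proj1 (proj1 (HD i)))).
  apply weak_tau_iff. eexists _, _. split; [apply derivation_wsum; [exact Hw|intros i; apply HD]|split].
  - intros s. apply (has_sum_unique _ _ _ (Hr s)).
    apply has_sum_ext with (fun i => p i * mto i 0%nat s + p i * mx i 0%nat s).
    + intros i. destruct (classic (p i = 0)) as [Z|Z]; [rewrite Z; ring|].
      rewrite (proj1 (proj2 (HD i) Z) s). ring.
    + apply has_sum_plus; auto; intros i; apply Rmult_le_pos; auto; apply subdist_nonneg, HD.
  - intros s.
    assert (Hrow : forall i, has_sum (fun t => p i * mx i t s) (p i * ths i s)).
    { intros i. destruct (classic (p i = 0)) as [Z|Z].
      - rewrite Z. apply has_sum_ext with (fun _ => 0); [intros; ring|]. rewrite Rmult_0_l. apply has_sum_zero.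
      - apply has_sum_scal; auto. apply (proj2 (proj2 (HD i) Z)). }
    destruct (has_sum_cols_of_rows (fun i t => p i * mx i t s) (fun i => p i * ths i s) (th s)) as [k [Hk1 Hk2]]; auto.
    { intros i t. apply Rmult_le_pos; auto. apply subdist_nonneg, HD. }
    apply has_sum_ext with k; auto. intros t. symmetry. apply (has_sum_unique _ _ _ (Sx t s)), Hk1.
Qed.

Lemma weak_act_comb (a : Act) (p : nat -> R) (rhos ths : nat -> subd Act) rho th : weights p ->
  (forall i, p i = 0 \/ weak_act tau (rhos i) a (ths i)) ->
  (forall s, has_sum (fun i => p i * rhos i s) (rho s)) -> (forall s, has_sum (fun i => p i * ths i s) (th s)) ->
  weak_act tau rho a th.
Proof.
  intros Hw H Hr Ht.
  destruct (choice (fun i (x : subd Act * subd Act) => p i = 0 \/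
     (subdist (fst x) /\ subdist (snd x) /\ weak_tau tau (rhos i) (fst x) /\ cstep (fst x) a (snd x) /\
      weak_tau tau (snd x) (ths i)))) as [f Hf].
  { intros i. destruct (H i) as [Z|(m1 & m2 & A)]; [exists (rhos i, rhos i)|exists (m1, m2)]; auto. }
  assert (G1 : forall i, p i = 0 \/ subdist (fst (f i))) by (intros i; destruct (Hf i); tauto).
  assert (G2 : forall i, p i = 0 \/ subdist (snd (f i))) by (intros i; destruct (Hf i); tauto).
  exists (wsum_of p (fun i => fst (f i))), (wsum_of p (fun i => snd (f i))).
  split; [|split; [|split; [|split]]].
  - apply wsum_of_subdist; auto.
  - apply wsum_of_subdist; auto.
  - apply (weak_tau_comb p rhos (fun i => fst (f i))); auto.
    + intros i; destruct (Hf i); tauto.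
    + apply wsum_of_spec; auto.
  - apply (@cstep_comb _ a p (fun i => fst (f i)) (fun i => snd (f i))); auto using is_wsum_of.
    intros i; destruct (Hf i); tauto.
  - apply (weak_tau_comb p (fun i => snd (f i)) ths); auto.
    + intros i; destruct (Hf i); tauto.
    + apply wsum_of_spec; auto.
Qed.

Lemma weak_hat_comb (a : Act) (p : nat -> R) (rhos ths : nat -> subd Act) rho th : weights p ->
  (forall i, p i = 0 \/ weak_hat tau (rhos i) a (ths i)) ->
  (forall s, has_sum (fun i => p i * rhos i s) (rho s)) -> (forall s, has_sum (fun i => p i * ths i s) (th s)) ->
  weak_hat tau rho a th.
Proof.
  intros Hw H Hr Ht. split; intros Ha.
  - apply (weak_tau_comb p rhos ths); auto. intros i; destruct (H i) as [Z|[Z _]]; auto.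
  - apply (weak_act_comb a p rhos ths); auto. intros i; destruct (H i) as [Z|[_ Z]]; auto.
Qed.

Definition mass (f : subd Act) : R := sum_of f.

Lemma mass_spec (f : subd Act) : subdist f -> has_sum f (mass f) /\ mass f <= 1.
Proof.
  intros H. destruct (subdist_mass f H) as [m [Hm Hm1]]. unfold mass. rewrite (sum_of_eq f m Hm). auto.
Qed.

Lemma mass_nonneg (f : subd Act) : subdist f -> 0 <= mass f.
Proof. intros H. apply (has_sum_nonneg f), mass_spec, H. Qed.

Lemma derivation_mass mto mx rho : derivation mto mx -> (forall s, rho s = mto 0%nat s + mx 0%nat s) ->
  forall N, has_sum rho (mass (mto N) + fsum (fun t => mass (mx t)) (seq 0 (S N))).
Proof.
  intros [H1 H2] Hr N. induction N as [|N IH].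
  - apply has_sum_ext with (fun s => mto 0%nat s + mx 0%nat s); [intros; auto|].
    simpl. rewrite Rplus_0_r.
    apply has_sum_plus; try apply subdist_nonneg; try apply mass_spec; apply H1.
  - assert (Hs : has_sum (fun s => mto (S N) s + mx (S N) s) (mass (mto (S N)) + mass (mx (S N)))).
    { apply has_sum_plus; try apply subdist_nonneg; try apply mass_spec; apply H1. }
    apply (cstep_mass _ _ _ _ (H2 N)) in Hs. pose proof (proj1 (mass_spec _ (proj1 (H1 N)))) as HN.
    rewrite (has_sum_unique _ _ _ HN Hs) in IH.
    rewrite (seq_S (S N)), fsum_app, fsum_cons. replace (0 + S N)%nat with (S N) by lia.
    change (fsum (fun t => mass (mx t)) nil) with 0.
    rewrite Rplus_0_r.
    replace (mass (mto (S N)) + (fsum (fun t => mass (mx t)) (seq 0 (S N)) + mass (mx (S N))))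
      with (mass (mto (S N)) + mass (mx (S N)) + fsum (fun t => mass (mx t)) (seq 0 (S N))) by ring. exact IH.
Qed.

Lemma derivation_final_mass mto mx th : derivation mto mx -> (forall s, has_sum (fun i => mx i s) (th s)) ->
  forall m, has_sum th m <-> has_sum (fun t => mass (mx t)) m.
Proof.
  intros [H1 H2] Ht m. symmetry. apply (has_sum_rows_cols_iff (fun t s => mx t s)); auto.
  - intros; apply subdist_nonneg, H1.
  - intros; apply mass_spec, H1.
Qed.

Lemma weak_tau_mass_le rho th m : weak_tau tau rho th -> has_sum rho m -> exists m', has_sum th m' /\ m' <= m.
Proof.
  intros W Hm. apply weak_tau_iff in W. destruct W as (mto & mx & D & Hr & Ht).
  destruct (has_sum_nat_bounded (fun t => mass (mx t)) m) as [m' [Hm' Hm'1]].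
  - intros t. apply mass_nonneg, D.
  - intros [|N]; [simpl; apply (has_sum_nonneg _ _ Hm)|].
    rewrite (has_sum_unique _ _ _ Hm (derivation_mass mto mx rho D Hr N)).
    pose proof (mass_nonneg _ (proj1 (proj1 D N))). lra.
  - exists m'. split; auto. apply (derivation_final_mass mto mx th D Ht). auto.
Qed.

Lemma weak_tau_subdist rho th : weak_tau tau rho th -> subdist rho -> subdist th.
Proof.
  intros W Hs. destruct (subdist_mass rho Hs) as [m [Hm Hm1]].
  destruct (weak_tau_mass_le rho th m W Hm) as [m' [H1 H2]].
  apply subdist_of_mass with m'; [|auto|lra]. intros s. apply weak_tau_iff in W.
  destruct W as (mto & mx & D & Hr & Ht). apply (has_sum_nonneg _ _ (Ht s)).
Qed.

Lemma derivation_residual_vanishes mto mx rho th m : derivation mto mx ->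
  (forall s, rho s = mto 0%nat s + mx 0%nat s) -> (forall s, has_sum (fun i => mx i s) (th s)) ->
  has_sum rho m -> has_sum th m ->
  forall e, e > 0 -> exists N, forall n, (N <= n)%nat -> mass (mto n) < e.
Proof.
  intros D Hr Ht Hm Hth e He.
  pose proof (proj1 (derivation_final_mass mto mx th D Ht m) Hth) as H.
  assert (Hmx : nonneg_fun (fun t => mass (mx t))) by (intros t; apply mass_nonneg, D).
  destruct (proj1 (has_sum_nat_lim _ _ Hmx) H e He) as [N HN]. exists N. intros n Hn.
  specialize (HN (S n) ltac:(lia)). rewrite (has_sum_unique _ _ _ Hm (derivation_mass mto mx rho D Hr n)) in HN.
  pose proof (mass_nonneg _ (proj1 (proj1 D n))).
  rewrite Rabs_left1 in HN; lra.
Qed.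

Lemma cstep_transport_partition nu a mu (Q : nat -> nexp Act -> R) : cstep nu a mu -> partition_of_unity Q ->
  exists Q', partition_of_unity Q' /\ forall u, cstep (fun s => Q u s * nu s) a (fun s => Q' u s * mu s).
Proof.
  intros H HQ. destruct (cstep_split nu a mu Q H HQ) as [mus [H1 H2]].
  assert (Hmn : forall u s, 0 <= mus u s) by (intros u s; apply subdist_nonneg, (cstep_subdist _ _ _ (H1 u))).
  destruct (partition_of_unity_ratio mus mu Hmn H2) as [Q' [HQ' E]].
  exists Q'. split; auto. intros u. replace (fun s => Q' u s * mu s) with (mus u); auto.
  apply functional_extensionality; auto.
Qed.

Lemma derivation_partition mto mx (q : nat -> nexp Act -> R) : derivation mto mx -> partition_of_unity q ->
  exists Rr : nat -> nat -> nexp Act -> R, (forall t, partition_of_unity (fun u => Rr u t)) /\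
    (forall u s, Rr u 0%nat s = q u s) /\
    (forall u t, cstep (fun s => Rr u t s * mto t s) tau
                       (fun s => Rr u (S t) s * mto (S t) s + Rr u (S t) s * mx (S t) s)).
Proof.
  intros [_ D] Hq.
  destruct (choice (fun (x : nat * (nat -> nexp Act -> R)) (y : nat -> nexp Act -> R) =>
    partition_of_unity (snd x) -> partition_of_unity y /\
    forall u, cstep (fun s => snd x u s * mto (fst x) s) tau (fun s => y u s * (mto (S (fst x)) s + mx (S (fst x)) s))))
    as [f Hf].
  { intros [t Q]. destruct (classic (partition_of_unity Q)) as [G|G].
    - destruct (cstep_transport_partition _ _ _ Q (D t) G) as [Q' HQ']. exists Q'. simpl; auto.
    - exists Q. intros; contradiction. }
  set (rec := fix rec (t : nat) : nat -> nexp Act -> R := match t with 0%nat => q | S t' => f (t', rec t') end).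
  assert (Hg : forall t, partition_of_unity (rec t)).
  { induction t; [exact Hq|]. apply (Hf (t, rec t)). auto. }
  exists (fun u t => rec t u). split; [|split].
  - intros t. apply Hg.
  - intros; reflexivity.
  - intros u t. replace (fun s => rec (S t) u s * mto (S t) s + rec (S t) u s * mx (S t) s)
      with (fun s => rec (S t) u s * (mto (S t) s + mx (S t) s))
      by (apply functional_extensionality; intros; ring).
    apply (proj2 (Hf (t, rec t) (Hg t)) u).
Qed.

End WeakTransitions.

(* Concatenating the weak transitions [a n ==> a (n+1) + b (n+1)].  Level [n] runs a derivation
   [(xs n, ys n)] of [a n], split by the global time at which its mass enters: [start n u s] is the
   fraction of [a n s] entering at time [u], and [slice n u t] follows that fraction for [t] local
   steps.  Of the mass stopping at level [n] and global time [w], the [a (n+1)] share enters level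
   [n+1] at time [w] and the [b (n+1)] share stops for good.  Summing all levels gives a single
   derivation; no mass is lost because the mass still waiting at level [n], at most [a n], tends to 0. *)
Section Concatenation.
Context {Act : Type} (tau : Act).

Variables (rho : subd Act) (a b : nat -> subd Act) (th : subd Act).
Hypothesis rho_subdist : subdist rho.
Hypothesis a_0 : forall s, a 0%nat s = rho s.
Hypothesis a_nonneg : forall n s, 0 <= a n s.
Hypothesis b_nonneg : forall n s, 0 <= b n s.
Hypothesis a_vanishes : forall s e, e > 0 -> exists N, forall n, (N <= n)%nat -> a n s < e.
Hypothesis th_sum : forall s, has_sum (fun n => b (S n) s) (th s).

Variables xs ys : nat -> nat -> subd Act.
Hypothesis xys_derivation : forall n, derivation tau (xs n) (ys n).
Hypothesis xys_init : forall n s, a n s = xs n 0%nat s + ys n 0%nat s.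
Hypothesis xys_final : forall n s, has_sum (fun t => ys n t s) (a (S n) s + b (S n) s).

Variable propagate : nat -> (nat -> nexp Act -> R) -> nat -> nat -> nexp Act -> R.
Hypothesis propagate_spec : forall n Q, partition_of_unity Q ->
  (forall t, partition_of_unity (fun u => propagate n Q u t)) /\ (forall u s, propagate n Q u 0%nat s = Q u s) /\
  (forall u t, cstep (fun s => propagate n Q u t s * xs n t s) tau
     (fun s => propagate n Q u (S t) s * xs n (S t) s + propagate n Q u (S t) s * ys n (S t) s)).

Lemma xs_nonneg n t s : 0 <= xs n t s.
Proof. apply subdist_nonneg, (proj1 (xys_derivation n) t). Qed.

Lemma ys_nonneg n t s : 0 <= ys n t s.
Proof. apply subdist_nonneg, (proj1 (xys_derivation n) t). Qed.

Definition a_share n s :=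
  if Req_EM_T (a (S n) s + b (S n) s) 0 then 0 else a (S n) s / (a (S n) s + b (S n) s).

Lemma a_share_bounds n s : 0 <= a_share n s <= 1.
Proof.
  unfold a_share. destruct Req_EM_T; [lra|]. pose proof (a_nonneg (S n) s). pose proof (b_nonneg (S n) s).
  split; [apply Rmult_le_pos; auto; apply Rlt_le, Rinv_0_lt_compat; lra|].
  apply Rmult_le_reg_r with (a (S n) s + b (S n) s); [lra|]. unfold Rdiv. rewrite Rmult_assoc, Rinv_l; lra.
Qed.

Lemma a_share_b n s : (1 - a_share n s) * (a (S n) s + b (S n) s) = b (S n) s.
Proof.
  unfold a_share. pose proof (a_nonneg (S n) s). pose proof (b_nonneg (S n) s).
  destruct Req_EM_T as [Z|Z]; [lra|field; auto].
Qed.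

Lemma has_sum_level_stops n (Rr : nat -> nat -> nexp Act -> R) s : (forall t, partition_of_unity (fun u => Rr u t)) ->
  has_sum (antidiag (fun u t => Rr u t s * ys n t s)) (a (S n) s + b (S n) s).
Proof.
  intros HR. assert (Hn : forall u t, 0 <= Rr u t s * ys n t s).
  { intros u t. apply Rmult_le_pos; [apply (proj1 (HR t))|apply ys_nonneg]. }
  apply has_sum_antidiagonals; auto.
  apply (has_sum_pairs_of_cols _ (fun t => ys n t s)); auto.
  intros t. apply has_sum_ext with (fun u => ys n t s * Rr u t s); [intros; ring|].
  apply has_sum_scal_1; [apply ys_nonneg|apply (proj2 (HR t))].
Qed.

Definition next_start n (Q : nat -> nexp Act -> R) : nat -> nexp Act -> R := fun w s =>
  if Req_EM_T (a (S n) s) 0 then (if Nat.eq_dec w 0 then 1 else 0)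
  else antidiag (fun u t => propagate n Q u t s * ys n t s) w / (a (S n) s + b (S n) s).

Fixpoint start (n : nat) : nat -> nexp Act -> R :=
  match n with
  | 0%nat => fun u _ => if Nat.eq_dec u 0 then 1 else 0
  | S n' => next_start n' (start n')
  end.

Lemma start_partition n : partition_of_unity (start n).
Proof.
  induction n as [|n IH]; [apply partition_of_unity_first|]. simpl.
  destruct (propagate_spec n (start n) IH) as [HR _].
  pose proof (fun s => has_sum_level_stops n _ s HR) as Hs. split.
  - intros w s. unfold next_start. destruct Req_EM_T; [destruct Nat.eq_dec; lra|].
    pose proof (a_nonneg (S n) s). pose proof (b_nonneg (S n) s). unfold Rdiv. apply Rmult_le_pos.
    + apply antidiag_nonneg. intros u t. apply Rmult_le_pos; [apply (proj1 (HR t))|apply ys_nonneg].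
    + apply Rlt_le, Rinv_0_lt_compat. lra.
  - intros s. unfold next_start. destruct Req_EM_T as [Z|Z]; [apply (proj2 partition_of_unity_first s)|].
    pose proof (a_nonneg (S n) s). pose proof (b_nonneg (S n) s).
    apply has_sum_ext with (fun w => / (a (S n) s + b (S n) s) * antidiag (fun u t => propagate n (start n) u t s * ys n t s) w);
      [intros; unfold Rdiv; ring|].
    replace 1 with (/ (a (S n) s + b (S n) s) * (a (S n) s + b (S n) s)) by (field; lra).
    apply has_sum_scal; [apply Rlt_le, Rinv_0_lt_compat; lra|apply Hs].
Qed.

Definition slice n := propagate n (start n).

Lemma slice_spec n :
  (forall t, partition_of_unity (fun u => slice n u t)) /\ (forall u s, slice n u 0%nat s = start n u s) /\
  (forall u t, cstep (fun s => slice n u t s * xs n t s) tau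
     (fun s => slice n u (S t) s * xs n (S t) s + slice n u (S t) s * ys n (S t) s)).
Proof. apply propagate_spec, start_partition. Qed.

Lemma slice_nonneg n u t s : 0 <= slice n u t s.
Proof. apply (proj1 (proj1 (slice_spec n) t)). Qed.

Definition waiting n u s := start n u s * a n s.

Lemma waiting_init n u s : waiting n u s = slice n u 0%nat s * (xs n 0%nat s + ys n 0%nat s).
Proof. unfold waiting. rewrite (proj1 (proj2 (slice_spec n))), xys_init. reflexivity. Qed.

Lemma waiting_next n w s : waiting (S n) w s = a_share n s * antidiag (fun u t => slice n u t s * ys n t s) w.
Proof.
  unfold waiting, slice, a_share. simpl. unfold next_start.
  pose proof (a_nonneg (S n) s). pose proof (b_nonneg (S n) s).
  destruct (Req_EM_T (a (S n) s) 0) as [Z|Z]; destruct Req_EM_T as [Z2|Z2];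
    [rewrite Z; ring|rewrite Z; unfold Rdiv; ring|lra|field; auto].
Qed.

Lemma waiting_bounds n u s : 0 <= waiting n u s <= a n s.
Proof.
  unfold waiting. pose proof (start_partition n) as G. pose proof (proj1 G u s).
  pose proof (partition_of_unity_le1 _ u s G). pose proof (a_nonneg n s). split; [apply Rmult_le_pos|]; nra.
Qed.

Lemma waiting_0 u s : waiting 0%nat u s = if Nat.eq_dec u 0 then rho s else 0.
Proof. unfold waiting. simpl. rewrite a_0. destruct Nat.eq_dec; ring. Qed.

Definition moving n w s := antidiag (fun u t => slice n u t s * xs n t s) w.
Definition stopping n w s := (1 - a_share n s) * antidiag (fun u t => slice n u t s * ys n t s) w.
Definition moved n w s :=
  antidiag (fun u t => slice n u (S t) s * xs n (S t) s + slice n u (S t) s * ys n (S t) s) w.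

Lemma moving_nonneg n w s : 0 <= moving n w s.
Proof. apply antidiag_nonneg. intros u t. apply Rmult_le_pos; [apply slice_nonneg|apply xs_nonneg]. Qed.

Lemma stopping_nonneg n w s : 0 <= stopping n w s.
Proof.
  pose proof (a_share_bounds n s). apply Rmult_le_pos; [lra|].
  apply antidiag_nonneg. intros u t. apply Rmult_le_pos; [apply slice_nonneg|apply ys_nonneg].
Qed.

Lemma moved_nonneg n w s : 0 <= moved n w s.
Proof.
  apply antidiag_nonneg. intros u t. pose proof (slice_nonneg n u (S t) s).
  pose proof (xs_nonneg n (S t) s). pose proof (ys_nonneg n (S t) s). nra.
Qed.

Lemma level_balance_0 n s : moving n 0 s + stopping n 0 s = waiting n 0%nat s - waiting (S n) 0%nat s.
Proof. rewrite waiting_init, waiting_next. unfold moving, stopping. rewrite !antidiag_0. ring. Qed.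

Lemma level_balance_S n w s :
  moving n (S w) s + stopping n (S w) s = moved n w s + waiting n (S w) s - waiting (S n) (S w) s.
Proof.
  rewrite waiting_init, waiting_next. unfold moving, stopping, moved.
  rewrite !antidiag_succ, antidiag_plus. simpl. ring.
Qed.

Lemma levels_balance_0 N s : fsum (fun n => moving n 0 s + stopping n 0 s) (seq 0 N) = rho s - waiting N 0%nat s.
Proof.
  induction N as [|N IH]; [rewrite waiting_0; simpl; ring|].
  rewrite seq_S, fsum_app, IH, fsum_cons, level_balance_0. simpl. ring.
Qed.

Lemma levels_balance_S N w s :
  fsum (fun n => moving n (S w) s + stopping n (S w) s) (seq 0 N) = fsum (fun n => moved n w s) (seq 0 N) - waiting N (S w) s.
Proof.
  induction N as [|N IH]; [rewrite waiting_0; simpl; ring|].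
  rewrite !seq_S, !fsum_app, IH, !fsum_cons, level_balance_S. simpl. ring.
Qed.

Lemma waiting_vanishes u s e : e > 0 -> exists N, forall n, (N <= n)%nat -> waiting n u s < e.
Proof.
  intros He. destruct (a_vanishes s e He) as [N HN]. exists N. intros n Hn.
  specialize (HN n Hn). pose proof (waiting_bounds n u s). lra.
Qed.

Definition flat_moving w s := sum_of (fun n => moving n w s).
Definition flat_stopped w s := sum_of (fun n => stopping n w s).

Lemma has_sum_levels w s (c : nat -> R) I :
  (forall N, fsum (fun n => moving n w s + stopping n w s) (seq 0 N) = c N - waiting N w s) ->
  (forall N, c N <= I) -> (forall e, e > 0 -> exists N, forall n, (N <= n)%nat -> I - c n < e) ->
  has_sum (fun n => moving n w s) (flat_moving w s) /\ has_sum (fun n => stopping n w s) (flat_stopped w s) /\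
  flat_moving w s + flat_stopped w s = I.
Proof.
  intros Hbal Hc Hlim.
  assert (Hle : forall N, fsum (fun n => moving n w s + stopping n w s) (seq 0 N) <= I).
  { intros N. rewrite Hbal. pose proof (waiting_bounds N w s). specialize (Hc N). lra. }
  assert (HM : has_sum (fun n => moving n w s) (flat_moving w s)).
  { destruct (has_sum_nat_bounded (fun n => moving n w s) I) as [L [HL _]]; [intros n; apply moving_nonneg| |].
    - intros N. eapply Rle_trans; [|apply (Hle N)]. apply fsum_le. intros n _. pose proof (stopping_nonneg n w s). lra.
    - apply sum_of_spec; eauto. }
  assert (HS : has_sum (fun n => stopping n w s) (flat_stopped w s)).
  { destruct (has_sum_nat_bounded (fun n => stopping n w s) I) as [L [HL _]]; [intros n; apply stopping_nonneg| |].
    - intros N. eapply Rle_trans; [|apply (Hle N)]. apply fsum_le. intros n _. pose proof (moving_nonneg n w s). lra.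
    - apply sum_of_spec; eauto. }
  split; [auto|split; [auto|]].
  assert (Hn : nonneg_fun (fun n => moving n w s + stopping n w s)).
  { intros n. pose proof (moving_nonneg n w s). pose proof (stopping_nonneg n w s). lra. }
  apply (has_sum_unique (fun n => moving n w s + stopping n w s)).
  - apply has_sum_plus; auto; intros n; [apply moving_nonneg|apply stopping_nonneg].
  - apply has_sum_nat_lim; auto. intros e He.
    destruct (Hlim (e / 2)) as [N1 HN1]; [lra|]. destruct (waiting_vanishes w s (e / 2)) as [N2 HN2]; [lra|].
    exists (Nat.max N1 N2). intros n Hn'. rewrite Hbal. specialize (HN1 n ltac:(lia)). specialize (HN2 n ltac:(lia)).
    pose proof (waiting_bounds n w s). specialize (Hc n). rewrite Rabs_left1; lra.
Qed.

Lemma flat_0 s : has_sum (fun n => moving n 0 s) (flat_moving 0 s) /\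
  has_sum (fun n => stopping n 0 s) (flat_stopped 0 s) /\ flat_moving 0 s + flat_stopped 0 s = rho s.
Proof.
  apply (has_sum_levels 0 s (fun _ => rho s)); [intros N; apply levels_balance_0|intros; lra|].
  intros e He. exists 0%nat. intros; lra.
Qed.

Lemma flat_S w s T : has_sum (fun n => moved n w s) T ->
  has_sum (fun n => moving n (S w) s) (flat_moving (S w) s) /\
  has_sum (fun n => stopping n (S w) s) (flat_stopped (S w) s) /\ flat_moving (S w) s + flat_stopped (S w) s = T.
Proof.
  intros HT. assert (Hn : nonneg_fun (fun n => moved n w s)) by (intros n; apply moved_nonneg).
  apply (has_sum_levels (S w) s (fun N => fsum (fun n => moved n w s) (seq 0 N))).
  - intros N; apply levels_balance_S.
  - intros N. apply (has_sum_ub _ _ _ HT (seq_NoDup _ _)).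
  - intros e He. destruct (proj1 (has_sum_nat_lim _ _ Hn) HT e He) as [N HN]. exists N. intros n Hn'.
    specialize (HN n Hn'). pose proof (has_sum_ub _ _ _ HT (seq_NoDup n 0)). rewrite Rabs_left1 in HN; lra.
Qed.

Lemma level_lifting n w : subdist (moving n w) -> lifting (step_rel tau) (moving n w) (moved n w).
Proof.
  intros Hs. destruct (subdist_mass _ Hs) as [m [Hm _]].
  assert (Trunc : forall F : nat -> nat -> R, (forall u t, 0 <= F u t) ->
            has_sum (fun u => (if Compare_dec.le_dec u w then 1 else 0) * F u (w - u)%nat) (antidiag F w)).
  { intros F HF. apply has_sum_ext with (fun u => if Compare_dec.le_dec u w then F u (w - u)%nat else 0).
    - intros u; destruct Compare_dec.le_dec; ring.
    - apply has_sum_truncate. intros; apply HF. }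
  apply (lifting_comb_eq _ (step_rel_full tau) (fun u => if Compare_dec.le_dec u w then 1 else 0)
    (fun u s => slice n u (w - u)%nat s * xs n (w - u)%nat s)
    (fun u s => slice n u (S (w - u)) s * xs n (S (w - u)) s + slice n u (S (w - u)) s * ys n (S (w - u)) s) _ _ m).
  - intros u; destruct Compare_dec.le_dec; lra.
  - intros u. destruct Compare_dec.le_dec; [right|left; auto].
    apply cstep_lifting, (proj2 (proj2 (slice_spec n))).
  - intros s. apply (Trunc (fun u t => slice n u t s * xs n t s)).
    intros u t. apply Rmult_le_pos; [apply slice_nonneg|apply xs_nonneg].
  - intros s. apply (Trunc (fun u t => slice n u (S t) s * xs n (S t) s + slice n u (S t) s * ys n (S t) s)).
    intros u t. pose proof (slice_nonneg n u (S t) s). pose proof (xs_nonneg n (S t) s).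
    pose proof (ys_nonneg n (S t) s). nra.
  - exact Hm.
Qed.

Lemma flat_step w : (forall s, has_sum (fun n => moving n w s) (flat_moving w s)) -> subdist (flat_moving w) ->
  exists T : subd Act, (forall s, has_sum (fun n => moved n w s) (T s)) /\ cstep (flat_moving w) tau T.
Proof.
  intros HX Hs. destruct (subdist_mass _ Hs) as [m [Hm _]].
  destruct (lifting_comb _ (step_rel_full tau) (fun _ => 1) (fun n s => moving n w s) (fun n s => moved n w s)
    (flat_moving w) m) as [T [H1 H2]]; auto.
  - intros; lra.
  - intros n. right. apply level_lifting. apply subdist_dominated with (flat_moving w); auto.
    + intros s; apply moving_nonneg.
    + intros s. apply (has_sum_term_le (fun n => moving n w s)). auto.
  - intros s. apply has_sum_ext with (fun n => moving n w s); auto. intros; ring.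
  - exists T. split; [|apply lifting_cstep; auto].
    intros s. apply has_sum_ext with (fun n => 1 * moved n w s); auto. intros; ring.
Qed.

Lemma flat_invariants w : (forall s, has_sum (fun n => moving n w s) (flat_moving w s)) /\
  (forall s, has_sum (fun n => stopping n w s) (flat_stopped w s)) /\
  subdist (flat_moving w) /\ subdist (flat_stopped w).
Proof.
  induction w as [|w (H1 & H2 & H3 & H4)].
  - split; [intros s; apply flat_0|split; [intros s; apply flat_0|]].
    apply subdist_summands with rho; auto; [intros s; apply (has_sum_nonneg _ _ (proj1 (flat_0 s)))|
      intros s; apply (has_sum_nonneg _ _ (proj1 (proj2 (flat_0 s))))|intros s; apply flat_0].
  - destruct (flat_step w H1 H3) as [T [HT HC]].
    pose proof (proj2 (cstep_subdist _ _ _ HC)) as HTs.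
    split; [intros s; apply (flat_S w s _ (HT s))|split; [intros s; apply (flat_S w s _ (HT s))|]].
    apply subdist_summands with T; auto; [intros s; apply (has_sum_nonneg _ _ (proj1 (flat_S w s _ (HT s))))|
      intros s; apply (has_sum_nonneg _ _ (proj1 (proj2 (flat_S w s _ (HT s)))))|intros s; apply (flat_S w s _ (HT s))].
Qed.

Lemma stopping_row n s : has_sum (fun w => stopping n w s) (b (S n) s).
Proof.
  rewrite <- a_share_b. pose proof (a_share_bounds n s). apply has_sum_scal; [lra|].
  apply has_sum_level_stops, slice_spec.
Qed.

Lemma weak_tau_concat_core : weak_tau tau rho th.
Proof.
  apply weak_tau_iff. exists flat_moving, flat_stopped. split; [split|split].
  - intros w. split; apply flat_invariants.
  - intros w. destruct (flat_invariants w) as (H1 & _ & H3 & _). destruct (flat_step w H1 H3) as [T [HT HC]].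
    replace (fun s => flat_moving (S w) s + flat_stopped (S w) s) with T; auto.
    apply functional_extensionality. intros s. symmetry. apply (flat_S w s _ (HT s)).
  - intros s. symmetry. apply flat_0.
  - intros s.
    destruct (has_sum_cols_of_rows (fun n w => stopping n w s) (fun n => b (S n) s) (th s)) as [k [Hk1 Hk2]]; auto.
    + intros n w. apply stopping_nonneg.
    + intros n. apply stopping_row.
    + apply has_sum_ext with k; auto. intros w. symmetry. apply sum_of_eq, Hk1.
Qed.

End Concatenation.

Lemma weak_tau_concat {Act : Type} (tau : Act) (rho : subd Act) (a b : nat -> subd Act) (th : subd Act) :
  subdist rho -> (forall s, a 0%nat s = rho s) -> (forall n s, 0 <= a n s) -> (forall n s, 0 <= b n s) ->
  (forall n, weak_tau tau (a n) (fun s => a (S n) s + b (S n) s)) ->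
  (forall s e, e > 0 -> exists N, forall n, (N <= n)%nat -> a n s < e) ->
  (forall s, has_sum (fun n => b (S n) s) (th s)) ->
  weak_tau tau rho th.
Proof.
  intros Hrho Ha0 Ha Hb HD Hlim Hth.
  destruct (derivation_family tau (fun _ => 1) a (fun n s => a (S n) s + b (S n) s)) as (xs & ys & Hxy);
    [intros; right; auto|].
  assert (Hinit : forall n s, a n s = xs n 0%nat s + ys n 0%nat s) by (intros n; apply (Hxy n); lra).
  assert (Hfinal : forall n s, has_sum (fun t => ys n t s) (a (S n) s + b (S n) s)) by (intros n; apply (Hxy n); lra).
  destruct (choice (fun (x : nat * (nat -> nexp Act -> R)) (Rr : nat -> nat -> nexp Act -> R) =>
    partition_of_unity (snd x) ->
    (forall t, partition_of_unity (fun u => Rr u t)) /\ (forall u s, Rr u 0%nat s = snd x u s) /\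
    (forall u t, cstep (fun s => Rr u t s * xs (fst x) t s) tau
       (fun s => Rr u (S t) s * xs (fst x) (S t) s + Rr u (S t) s * ys (fst x) (S t) s)))) as [f Hf].
  { intros [n Q]. destruct (classic (partition_of_unity Q)) as [G|G].
    - destruct (derivation_partition tau (xs n) (ys n) Q (proj1 (Hxy n)) G) as [Rr HR]. exists Rr. auto.
    - exists (fun _ _ _ => 0). intros; contradiction. }
  apply (weak_tau_concat_core tau rho a b th Hrho Ha0 Ha Hb Hlim Hth xs ys (fun n => proj1 (Hxy n)) Hinit Hfinal
    (fun n Q => f (n, Q)) (fun n Q => Hf (n, Q))).
Qed.

Section Simulation.
Context {Act : Type} (tau : Act).
Notation W := (wbisim tau).
Implicit Types (rho sg th nu mu : subd Act).

Lemma weak_tau_trans rho sg th : subdist rho -> weak_tau tau rho sg -> weak_tau tau sg th -> weak_tau tau rho th.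
Proof.
  intros Hr H1 H2.
  pose proof (weak_tau_subdist tau _ _ H1 Hr) as Hs. pose proof (weak_tau_subdist tau _ _ H2 Hs) as Ht.
  set (a := fun n : nat => match n with 0%nat => rho | 1%nat => sg | _ => fun _ : nexp Act => 0 end).
  set (b := fun n : nat => match n with 2%nat => th | _ => fun _ : nexp Act => 0 end).
  apply (weak_tau_concat tau rho a b th Hr).
  - intros; reflexivity.
  - intros [|[|n]] s; simpl; try lra; apply subdist_nonneg; auto.
  - intros [|[|[|n]]] s; simpl; try lra; apply subdist_nonneg; auto.
  - intros [|[|n]]; simpl.
    + replace (fun s => sg s + 0) with sg; auto. apply functional_extensionality; intros; ring.
    + replace (fun s => 0 + th s) with th; auto. apply functional_extensionality; intros; ring.
    + replace (fun _ : nexp Act => 0 + 0) with (fun _ : nexp Act => 0); [apply weak_tau_refl, subdist_zero|].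
      apply functional_extensionality; intros; ring.
  - intros s e He. exists 2%nat. intros [|[|n]] Hn; [lia|lia|simpl; lra].
  - intros s. apply (has_sum_single _ 1%nat); [|intros [|[|n]] Hn; simpl; try lra; contradiction|reflexivity].
    intros [|[|n]]; simpl; try lra. apply subdist_nonneg; auto.
Qed.

Lemma wbisim_closed E F : W E F -> closed E /\ closed F.
Proof. intros [Rel [[H _] HR]]. apply H; auto. Qed.

Lemma weak_hat_lift_comb (Rel : nexp Act -> nexp Act -> Prop) a (c : nat -> R) (rhos mus : nat -> subd Act) rho mu' :
  weights c -> (forall k, c k = 0 \/ exists x, weak_hat tau (rhos k) a x /\ lift Rel x (mus k)) ->
  (forall s, has_sum (fun k => c k * rhos k s) (rho s)) -> (forall s, has_sum (fun k => c k * mus k s) (mu' s)) ->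
  exists nu, weak_hat tau rho a nu /\ lift Rel nu mu'.
Proof.
  intros Hw H Hrho Hmu.
  destruct (choice (fun k x => c k = 0 \/ (weak_hat tau (rhos k) a x /\ lift Rel x (mus k)))) as [f Hf].
  { intros k. destruct (H k) as [Z|[x Hx]]; [exists (fun _ => 0)|exists x]; auto. }
  assert (Hfs : forall k, c k = 0 \/ subdist (f k)).
  { intros k. destruct (Hf k) as [Z|[_ Z]]; auto. right. apply (lift_subdist _ _ _ Z). }
  exists (wsum_of c f). split.
  - apply (weak_hat_comb tau a c rhos f); auto.
    + intros k. destruct (Hf k) as [Z|[Z _]]; auto.
    + apply wsum_of_spec; auto.
  - apply (@lift_comb _ Rel c f mus); auto using is_wsum_of.
    + intros k. destruct (Hf k) as [Z|[_ Z]]; auto.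
    + apply is_wsum_has_sum; auto. intros k s. apply weighted_nonneg; [apply Hw|].
      destruct (Hf k) as [Z|[_ Z]]; auto. right. apply subdist_nonneg, (lift_subdist _ _ _ Z).
Qed.

Lemma sim_dirac E F a mu' : W E F -> cstep (delta F) a mu' ->
  exists nu', weak_hat tau (delta E) a nu' /\ lift W nu' mu'.
Proof.
  intros HW HC. destruct (cstep_lifting _ _ _ HC) as [L Hs].
  destruct (lifting_weights _ (step_rel_full a) _ _ L Hs) as (c & E' & M & Hw & HcP & H1 & H2).
  assert (HE : forall k, c k <> 0 -> E' k = F).
  { intros k Hk. apply NNPP. intros Hne. pose proof (has_sum_term_le _ _ k (H1 (E' k))) as Hle.
    cbv beta in Hle. rewrite delta_at, delta_other in Hle; auto. pose proof (proj1 Hw k). lra. }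
  assert (Hc1 : has_sum c 1).
  { rewrite <- (delta_at F). apply has_sum_ext with (fun k => c k * delta (E' k) F); auto.
    intros k. destruct (Req_dec (c k) 0) as [Z|Z]; [rewrite Z; ring|rewrite HE, delta_at; auto; ring]. }
  destruct HW as [Rel [HB HR]]. pose proof HB as (_ & _ & Hsim).
  apply (weak_hat_lift_comb _ a c (fun _ => delta E) M); auto.
  - intros k. destruct (Req_dec (c k) 0) as [Z|Z]; [left; auto|right].
    destruct (HcP k) as [Z'|Hstep]; [contradiction|]. rewrite HE in Hstep; auto.
    destruct (Hsim E F a (M k) HR Hstep) as [x [Hx1 Hx2]]. exists x. split; auto.
    apply lift_mono with Rel; auto. intros p q Hpq. exists Rel; auto.
  - intros s. apply has_sum_ext with (fun k => delta E s * c k); [intros; ring|].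
    apply has_sum_scal_1; auto. apply delta_full_dist.
Qed.

Lemma sim_cstep nu mu a mu' : lift W nu mu -> cstep mu a mu' ->
  exists nu', weak_hat tau nu a nu' /\ lift W nu' mu'.
Proof.
  intros HL HC. apply lift_flip in HL. destruct (lift_lifting _ _ _ HL) as [L Hs].
  destruct (lifting_weights _ (dirac_rel_full _) _ _ L Hs) as (c & F & M & Hw & HcP & H1 & H2).
  destruct (cstep_split_diracs mu a mu' c F HC (proj1 Hw) H1) as [ths [Hth Hsum]].
  apply (weak_hat_lift_comb _ a c M ths); auto.
  intros k. destruct (Hth k) as [Z|HCk]; [left; auto|].
  destruct (HcP k) as [Z|[E [HW ->]]]; [left; auto|right]. apply (sim_dirac E (F k)); auto.
Qed.

Lemma sim_tau_split nu mu m1 m2 : lift W nu mu -> cstep mu tau (fun s => m1 s + m2 s) ->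
  nonneg_fun m1 -> nonneg_fun m2 ->
  exists nu1 nu2, weak_tau tau nu (fun s => nu1 s + nu2 s) /\ lift W nu1 m1 /\ lift W nu2 m2.
Proof.
  intros HL HC H1 H2. destruct (sim_cstep _ _ _ _ HL HC) as [nu' [[Hw _] Hl]].
  destruct (lift_split_sum _ nu' m1 m2 Hl H1 H2) as [nu1 [nu2 [E [L1 L2]]]].
  exists nu1, nu2. split; [|auto]. replace (fun s => nu1 s + nu2 s) with nu'; auto.
  apply functional_extensionality; auto.
Qed.

Lemma sim_derivation nu mto mx : derivation tau mto mx -> lift W nu (fun s => mto 0%nat s + mx 0%nat s) ->
  exists As Bs : nat -> subd Act, (forall s, nu s = As 0%nat s + Bs 0%nat s) /\
    (forall t, lift W (As t) (mto t) /\ lift W (Bs t) (mx t)) /\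
    (forall t, weak_tau tau (As t) (fun s => As (S t) s + Bs (S t) s)).
Proof.
  intros [D1 D2] HL.
  assert (N : forall t, nonneg_fun (mto t) /\ nonneg_fun (mx t)).
  { intros t. split; apply subdist_nonneg, D1. }
  destruct (choice (fun (x : nat * subd Act) (y : subd Act * subd Act) => lift W (snd x) (mto (fst x)) ->
     weak_tau tau (snd x) (fun s => fst y s + snd y s) /\ lift W (fst y) (mto (S (fst x))) /\
     lift W (snd y) (mx (S (fst x))))) as [f Hf].
  { intros [t A]. destruct (classic (lift W A (mto t))) as [HA|HA].
    - destruct (sim_tau_split A (mto t) _ _ HA (D2 t) (proj1 (N (S t))) (proj2 (N (S t)))) as (A1 & A2 & H).
      exists (A1, A2). auto.
    - exists (A, A). intros; contradiction. }
  destruct (lift_split_sum _ nu _ _ HL (proj1 (N 0%nat)) (proj2 (N 0%nat))) as [A0 [B0 [E0 [L0 L0']]]].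
  set (AB := fix AB (t : nat) : subd Act * subd Act :=
         match t with 0%nat => (A0, B0) | S t' => f (t', fst (AB t')) end).
  assert (Inv : forall t, lift W (fst (AB t)) (mto t) /\ lift W (snd (AB t)) (mx t)).
  { induction t as [|t IH]; [simpl; auto|]. simpl. apply (Hf (t, fst (AB t))), IH. }
  exists (fun t => fst (AB t)), (fun t => snd (AB t)). split; [auto|split; [auto|]].
  intros t. apply (Hf (t, fst (AB t))), Inv.
Qed.

Lemma lift_series (Rel : nexp Act -> nexp Act -> Prop) (nus mus : nat -> subd Act) mu m :
  (forall n, lift Rel (nus n) (mus n)) -> (forall s, has_sum (fun n => mus n s) (mu s)) -> has_sum mu m -> m <= 1 ->
  exists nu, (forall s, has_sum (fun n => nus n s) (nu s)) /\ lift Rel nu mu.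
Proof.
  intros HL Hmu Hm Hm1.
  assert (Hsd : forall n, subdist (nus n) /\ subdist (mus n)) by (intros n; apply (lift_subdist _ _ _ (HL n))).
  assert (Hmass : forall n, has_sum (mus n) (mass (mus n))) by (intros n; apply mass_spec, Hsd).
  assert (Hnm : forall n, has_sum (nus n) (mass (mus n))) by (intros n; apply (lift_mass _ _ _ _ (HL n)); auto).
  assert (Hn : forall n s, 0 <= nus n s) by (intros n s; apply subdist_nonneg, Hsd).
  assert (Hrows : has_sum (fun n => mass (mus n)) m).
  { apply (has_sum_rows_cols_iff (fun n s => mus n s) _ mu); auto. intros n s; apply subdist_nonneg, Hsd. }
  assert (Hnu : forall s, has_sum (fun n => nus n s) (sum_of (fun n => nus n s))).
  { intros s. destruct (has_sum_dominated (fun n => nus n s) (fun n => mass (mus n)) m) as [x [Hx _]]; auto.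
    - intros n. apply (has_sum_term_le (nus n)). auto.
    - apply sum_of_spec; eauto. }
  assert (Hnum : has_sum (fun s => sum_of (fun n => nus n s)) m).
  { apply (has_sum_rows_cols_iff (fun n s => nus n s) (fun n => mass (mus n))); auto. }
  exists (fun s => sum_of (fun n => nus n s)). split; auto.
  destruct (lifting_comb _ (dirac_rel_full Rel) (fun _ => 1) nus mus (fun s => sum_of (fun n => nus n s)) m)
    as [mu2 [H1 H2]]; auto.
  - intros; lra.
  - intros n. right. apply lift_lifting, HL.
  - intros s. apply has_sum_ext with (fun n => nus n s); auto. intros; ring.
  - replace mu with mu2.
    + apply lifting_lift; auto. apply subdist_of_mass with m; auto. intros s; apply (has_sum_nonneg _ _ (Hnu s)).
    + apply functional_extensionality; intros s. apply (has_sum_unique (fun n => mus n s)); auto.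
      apply has_sum_ext with (fun n => 1 * mus n s); auto. intros; ring.
Qed.

Lemma weak_tau_sim nu mu mu' m : lift W nu mu -> weak_tau tau mu mu' -> has_sum mu m -> has_sum mu' m ->
  exists nu', weak_tau tau nu nu' /\ lift W nu' mu'.
Proof.
  intros HL HW Hm Hm'. pose proof (proj1 (lift_subdist _ _ _ HL)) as Hnu.
  assert (Hm1 : m <= 1).
  { destruct (subdist_mass _ (proj2 (lift_subdist _ _ _ HL))) as [m0 [Hm0 Hm01]].
    rewrite (has_sum_unique _ _ _ Hm Hm0). auto. }
  apply weak_tau_iff in HW. destruct HW as (mto & mx & D & Hr & Ht).
  assert (HL0 : lift W nu (fun s => mto 0%nat s + mx 0%nat s)).
  { replace (fun s => mto 0%nat s + mx 0%nat s) with mu; auto. apply functional_extensionality; auto. }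
  destruct (sim_derivation nu mto mx D HL0) as (As & Bs & H0 & Inv & Step).
  destruct (lift_series W Bs mx mu' m) as [nu' [Hnu' HL']]; auto; [intros n; apply Inv|].
  exists nu'. split; auto.
  apply (weak_tau_concat tau nu (fun n => match n with 0%nat => nu | S n' => As n' end)
                                (fun n => match n with 0%nat => fun _ => 0 | S n' => Bs n' end)); auto.
  - intros [|n] s; [apply subdist_nonneg; auto|apply subdist_nonneg, (lift_subdist _ _ _ (proj1 (Inv n)))].
  - intros [|n] s; [lra|apply subdist_nonneg, (lift_subdist _ _ _ (proj2 (Inv n)))].
  - intros [|n]; [|apply Step].
    replace (fun s => As 0%nat s + Bs 0%nat s) with nu; [apply weak_tau_refl; auto|].
    apply functional_extensionality; auto.
  - intros s e He. destruct (derivation_residual_vanishes tau mto mx mu mu' m D Hr Ht Hm Hm' e He) as [N HN].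
    exists (S N). intros [|n] Hn; [lia|]. specialize (HN n ltac:(lia)).
    pose proof (has_sum_term_le _ _ s (proj2 (lift_mass _ _ _ _ (proj1 (Inv n))) (proj1 (mass_spec _ (proj1 (proj1 D n)))))).
    lra.
Qed.

Lemma weak_act_sim nu mu a mu' m : a <> tau -> lift W nu mu -> weak_act tau mu a mu' ->
  has_sum mu m -> has_sum mu' m -> exists nu', weak_act tau nu a nu' /\ lift W nu' mu'.
Proof.
  intros Ha HL (mu1 & mu2 & Hs1 & Hs2 & W1 & C & W2) Hm Hm'.
  destruct (weak_tau_mass_le tau mu mu1 m W1 Hm) as [m1 [Hm1 Hm1le]].
  pose proof (proj1 (cstep_mass _ _ _ m1 C) Hm1) as Hm2.
  destruct (weak_tau_mass_le tau mu2 mu' m1 W2 Hm2) as [m2 [Hm2' Hm2le]].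
  rewrite (has_sum_unique _ _ _ Hm2' Hm') in Hm2le.
  assert (E : m1 = m) by lra. subst m1.
  destruct (weak_tau_sim nu mu mu1 m HL W1 Hm Hm1) as [nu1 [N1 L1]].
  destruct (sim_cstep nu1 mu1 a mu2 L1 C) as [rho [[_ Wr] Lr]].
  destruct (Wr Ha) as (p1 & p2 & Hp1 & Hp2 & Wp1 & Cp & Wp2).
  destruct (weak_tau_sim rho mu2 mu' m Lr W2 Hm2 Hm') as [nu' [N2 L2]].
  exists nu'. split; auto. exists p1, p2. split; [auto|split; [auto|split; [|split; auto]]].
  - apply weak_tau_trans with nu1; auto. apply (lift_subdist _ _ _ HL).
  - apply weak_tau_trans with rho; auto.
Qed.

Lemma lift_wbisim_closed nu mu : lift W nu mu -> subdist nu /\ closed_supp nu.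
Proof.
  intros H. split; [apply (lift_subdist _ _ _ H)|]. intros s Hs.
  destruct (lift_support _ _ _ s H Hs) as [F HF]. apply (wbisim_closed s F HF).
Qed.

End Simulation.

Theorem mainTheorem14 (Act : Type) (tau : Act)
  (mu mu' nu : subd Act) (a : Act) :
  subdist mu -> subdist mu' -> subdist nu ->
  closed_supp mu -> closed_supp mu' -> closed_supp nu ->
  lift (wbisim tau) nu mu ->
  weak_hat tau mu a mu' ->
  same_mass mu mu' ->
  exists nu', subdist nu' /\ closed_supp nu' /\
    weak_hat tau nu a nu' /\ lift (wbisim tau) nu' mu'.
Proof.
  intros _ _ _ _ _ _ HL [Htau Hact] [m [Hm Hm']].
  enough (exists nu', weak_hat tau nu a nu' /\ lift (wbisim tau) nu' mu') as [nu' [Hw HL']].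
  { exists nu'. destruct (lift_wbisim_closed tau nu' mu' HL'). auto. }
  destruct (classic (a = tau)) as [->|Ha].
  - destruct (weak_tau_sim tau nu mu mu' m HL (Htau eq_refl) Hm Hm') as [nu' [Hw HL']].
    exists nu'. repeat split; auto. contradiction.
  - destruct (weak_act_sim tau nu mu a mu' m Ha HL (Hact Ha) Hm Hm') as [nu' [Hw HL']].
    exists nu'. repeat split; auto. contradiction.
Qed.
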